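(* Let $\mathcal R$ be a strong CCTRS. If $s\in\mathcal T_{\mathrm p}(\mathcal H)$ is non-terminating with respect to $\to_{\Xi(\mathcal R),\mu}$, then $\zeta^-(s)\rightharpoonup^\infty$.
   Context: A CCTRS over $\mathcal F$ is a set $\mathcal R$ of conditional rules each of the form $f(\ell_1,\dots,\ell_n)\to r\Leftarrow a_1\approx b_1,\dots,a_k\approx b_k$ (defined symbols are roots of left-hand sides, others constructors; constructor terms contain only constructors and variables) where $\ell_1,\dots,\ell_n,b_1,\dots,b_k$ are constructor terms, the terms $f(\ell_1,\dots,\ell_n),b_1,\dots,b_k$ pairwise share no variables, $\mathrm{Var}(r)\subseteq\mathrm{Var}(\ell_1,\dots,\ell_n,b_1,\dots,b_k)$, and $\mathrm{Var}(a_i)\subseteq\mathrm{Var}(\ell_1,\dots,\ell_n,b_1,\dots,b_{i-1})$. $\mathcal R{\restriction}f$ is the set of rules with left-hand root $f$. A strong CCTRS is a CCTRS with each $\mathcal R{\restriction}f$ finite and each $f(\ell_1,\dots,\ell_n)$ and $b_j$ linear. Let $m_f=|\mathcal R{\restriction}f|$ (0 for constructors), with fixed enumeration $\rho^f_1,\dots,\rho^f_{m_f}$. Labeled reduction: $\mathcal G$ consists of the constructors and symbols $f_R$ ($R\subseteq\mathcal R{\restriction}f$, same arity as $f$); $\mathrm{label}$ replaces each defined $f$ by $f_{\mathcal R\restriction f}$; $\mathrm{erase}$ removes labels; labeled normal forms are terms over constructors, symbols $f_\emptyset$ and variables. $s\rightharpoonup t$ is defined inductively: either (i) there are $p$ and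 a rule $\rho\colon\ell\to r\Leftarrow c$ with $s|_p=f_R(s_1,\dots,s_n)$, $\rho\in R$, $t=s[f_{R\setminus\{\rho\}}(s_1,\dots,s_n)]_p$, and linear labeled normal forms $u_1,\dots,u_n$ on fresh variables and $\sigma$ with $s|_p=f_R(u_1,\dots,u_n)\sigma$ and $f(\mathrm{erase}(u_1),\dots,\mathrm{erase}(u_n))$ not unifiable with $\ell$; or (ii) there are $p$, $\rho\colon f(\ell_1,\dots,\ell_n)\to r\Leftarrow a_1\approx b_1,\dots,a_k\approx b_k$, $\sigma$, $0\le j\le k$ with $s|_p=f_R(\ell_1\sigma,\dots,\ell_n\sigma)$, $\rho\in R$, $\mathrm{label}(a_i)\sigma\rightharpoonup^*b_i\sigma$ for $1\le i\le j$, and either $j=k$, $t=s[\mathrm{label}(r)\sigma]_p$, or $j<k$, $\mathrm{label}(a_{j+1})\sigma\rightharpoonup^*u\tau$ for a linear labeled normal form $u$ with $\mathrm{erase}(u)$ not unifiable with $b_{j+1}$, and $t=s[f_{R\setminus\{\rho\}}(\ell_1\sigma,\dots,\ell_n\sigma)]_p$. $s\rightharpoonup_\rhd t$ if there are $p$, $\rho$ as in (ii), $\sigma$, $0\le j<k$ with $s|_p=f_R(\ell_1\sigma,\dots,\ell_n\sigma)$, $\rho\in R$, $\mathrm{label}(a_i)\sigma\rightharpoonup^*b_i\sigma$ for $i\le j$, and $t=\mathrm{label}(a_{j+1})\sigma$; $s\rightharpoonup^\infty$ means an infinite sequence of $\rightharpoonup\cup\rightharpoonup_\rhd$ steps from $s$.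 The transformed system: signature $\mathcal H$ with constants $\bot,\top$ ($\mu=\emptyset$); every $f\in\mathcal F$ of arity $n$ as a symbol of arity $n+m_f$ with $\mu(f)=\{1,\dots,n\}$; and for every defined $f$ of arity $n$, every $\rho^f_i$ with $k>0$ conditions and $1\le j\le k$ a symbol $f_i^j$ of arity $n+m_f+j-1$ with $\mu(f_i^j)=\{n+i+j-1\}$. A position is active in $t$ if it is $\epsilon$ or $iq$ with $i\in\mu(\mathrm{root}(t))$ and $q$ active in $t|_i$; $\to_{\Xi(\mathcal R),\mu}$ rewrites only at active positions. $\xi_\star$ ($\star\in\{\bot,\top\}$): identity on variables, homomorphic on constructors, $f(t_1..t_n)\mapsto f(\xi_\star(t_1),\dots,\xi_\star(t_n),\star,\dots,\star)$ ($m_f$ copies) for defined $f$. For a linear constructor term $t$: $\mathrm{AP}(x)=\emptyset$, and $\mathrm{AP}(f(t_1,\dots,t_n))$ consists of $g(x_1,\dots,x_m)$ for every constructor $g\neq f$ of arity $m$, $g(x_1,\dots,x_m,\bot,\dots,\bot)$ for every defined $g$ of arity $m$, and $f(x_1,\dots,x_{i-1},u,x_{i+1},\dots,x_n)$ for $u\in\mathrm{AP}(t_i)$ (fresh distinct $x$'s). Notation: $\langle t_1,\dots,t_n\rangle[u_1,\dots,u_j]_i$ is $t_1,\dots,t_{i-1},u_1,\dots,u_j,t_{i+1},\dots,t_n$. For the $i$-th rule $\rho_i\colon f(\vec\ell)\to r\Leftarrow a_1\approx b_1,\dots,a_k\approx b_k$ of $\mathcal R{\restriction}f$ and fresh distinct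 $x_1,\dots,x_{m_f},y_1,\dots,y_n$, $\Xi(\mathcal R)$ contains: $(1)$ if $k=0$: $f(\vec\ell,\langle\vec x\rangle[\top]_i)\to\xi_\top(r)$; if $k>0$: $(2)$ $f(\vec\ell,\langle\vec x\rangle[\top]_i)\to f_i^1(\vec\ell,\langle\vec x\rangle[\xi_\top(a_1)]_i)$, $(3)$ $f_i^k(\vec\ell,\langle\vec x\rangle[b_1,\dots,b_k]_i)\to\xi_\top(r)$, $(4)$ for $1\le j<k$: $f_i^j(\vec\ell,\langle\vec x\rangle[b_1,\dots,b_j]_i)\to f_i^{j+1}(\vec\ell,\langle\vec x\rangle[b_1,\dots,b_j,\xi_\top(a_{j+1})]_i)$, $(5)$ for $1\le j\le k$ and $v\in\mathrm{AP}(b_j)$ (fresh variables): $f_i^j(\vec\ell,\langle\vec x\rangle[b_1,\dots,b_{j-1},v]_i)\to f(\vec\ell,\langle\vec x\rangle[\bot]_i)$; and for any $k$: $(6)$ for $1\le j\le n$ and $v\in\mathrm{AP}(\ell_j)$ (fresh variables): $f(\langle\vec y\rangle[v]_j,\langle\vec x\rangle[\top]_i)\to f(\langle\vec y\rangle[v]_j,\langle\vec x\rangle[\bot]_i)$. Proper terms: a term of $\mathcal T(\mathcal H,\mathcal V)$ is proper if it is a variable, or $f(s_1,\dots,s_n)$ with $f$ a constructor and proper $s_i$, or $f(s_1,\dots,s_n,c_1,\dots,c_{m_f})$ with $f$ defined, proper $s_i$ and $c_i\in\{\bot,\top\}$; $\mathcal T_{\mathrm p}(\mathcal H)$ denotes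 the ground proper terms. For proper $s$, $\zeta^-(s)\in\mathcal T(\mathcal G,\mathcal V)$ is defined by $\zeta^-(x)=x$, $\zeta^-(f(s_1,\dots,s_n))=f(\zeta^-(s_1),\dots,\zeta^-(s_n))$ for constructors, and $\zeta^-(f(s_1,\dots,s_n,c_1,\dots,c_{m_f}))=f_R(\zeta^-(s_1),\dots,\zeta^-(s_n))$ with $R=\{\rho^f_i\mid c_i=\top\}$. *)

From Stdlib Require Import List Arith.
Import ListNotations.

Inductive term (S : Type) : Type :=
| Var : nat -> term S
| Fun : S -> list (term S) -> term S.
Arguments Var {S} _.
Arguments Fun {S} _ _.

Fixpoint subst {S : Type} (sg : nat -> term S) (t : term S) : term S :=
  match t with
  | Var x => sg x
  | Fun f ts => Fun f (map (subst sg) ts)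
  end.

Fixpoint vars {S : Type} (t : term S) : list nat :=
  match t with
  | Var x => [x]
  | Fun _ ts => flat_map vars ts
  end.

Fixpoint funs {S : Type} (t : term S) : list S :=
  match t with
  | Var _ => []
  | Fun f ts => f :: flat_map funs ts
  end.

Fixpoint fmap {A B : Type} (h : A -> B) (t : term A) : term B :=
  match t with
  | Var x => Var x
  | Fun f ts => Fun (h f) (map (fmap h) ts)
  end.

Definition linear {S : Type} (t : term S) : Prop := NoDup (vars t).
Definition linear_list {S : Type} (ts : list (term S)) : Prop :=
  NoDup (flat_map vars ts).

Definition disjoint (xs ys : list nat) : Prop :=
  forall x, In x xs -> ~ In x ys.

Definition unifiable {S : Type} (s t : term S) : Prop :=
  exists th : nat -> term S, subst th s = subst th t.

Inductive subterm_eq {S : Type} : term S -> term S -> Prop :=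
| st_refl t : subterm_eq t t
| st_arg s u g ts : In u ts -> subterm_eq s u -> subterm_eq s (Fun g ts).

(* replace the i-th (1-based) element of xs by the list us:
   <xs>[us]_i = x_1,..,x_{i-1},us,x_{i+1},..,x_n *)
Definition ins {A : Type} (xs : list A) (i : nat) (us : list A) : list A :=
  firstn (i - 1) xs ++ us ++ skipn i xs.

Fixpoint clear_at (l : list bool) (i : nat) : list bool :=
  match l, i with
  | [], _ => []
  | _ :: l', 0 => false :: l'
  | b :: l', S i' => b :: clear_at l' i'
  end.

(* A rule  f(l_1,..,l_n) -> r <= a_1 ~ b_1, ..., a_k ~ b_k  of R|f is stored
   in the list Rf f (the fixed enumeration rho^f_1..rho^f_{m_f});
   rconds = [(a_1,b_1); ...; (a_k,b_k)]. *)
Record crule (F : Type) := mkRule {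
  rargs : list (term F);
  rrhs : term F;
  rconds : list (term F * term F) }.
Arguments rargs {F} _.
Arguments rrhs {F} _.
Arguments rconds {F} _.

Inductive Hsym (F : Type) : Type :=
| HBot : Hsym F
| HTop : Hsym F
| HF : F -> Hsym F                    (* f, arity n + m_f *)
| HAux : F -> nat -> nat -> Hsym F.   (* f_i^j (i, j 1-based), arity n + m_f + j - 1 *)
Arguments HBot {F}.
Arguments HTop {F}.
Arguments HF {F} _.
Arguments HAux {F} _ _ _.

Section System.
Variable F : Type.
Variable arity : F -> nat.
Variable Rf : F -> list (crule F).

Definition fterm := term F.
(* labeled symbols f_R: (f, R) with R a bit vector of length m_f,
   bit i (0-based) set iff rho^f_{i+1} is in R; constructors carry [] *)
Definition gterm := term (F * list bool).
Definition hterm := term (Hsym F).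

Definition m (f : F) : nat := length (Rf f).
Definition is_constructor (f : F) : Prop := Rf f = [].

Inductive wf : fterm -> Prop :=
| wf_var x : wf (Var x)
| wf_fun f ts : length ts = arity f -> Forall wf ts -> wf (Fun f ts).

Definition cterm (t : fterm) : Prop := Forall is_constructor (funs t).

Definition rlhs (f : F) (rho : crule F) : fterm := Fun f (rargs rho).

Definition pairwise_disjoint (ls : list (list nat)) : Prop :=
  forall i j, i < length ls -> j < length ls -> i <> j ->
    disjoint (nth i ls []) (nth j ls []).

Definition is_CCTRS : Prop :=
  forall f rho, In rho (Rf f) ->
    length (rargs rho) = arity f /\
    Forall wf (rargs rho) /\ wf (rrhs rho) /\
    Forall (fun c => wf (fst c) /\ wf (snd c)) (rconds rho) /\
    Forall cterm (rargs rho) /\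
    Forall (fun c => cterm (snd c)) (rconds rho) /\
    pairwise_disjoint (vars (rlhs f rho) :: map (fun c => vars (snd c)) (rconds rho)) /\
    incl (vars (rrhs rho))
         (vars (rlhs f rho) ++ flat_map (fun c => vars (snd c)) (rconds rho)) /\
    (forall i, i < length (rconds rho) ->
       incl (vars (fst (nth i (rconds rho) (Var 0, Var 0))))
            (vars (rlhs f rho) ++
             flat_map (fun c => vars (snd c)) (firstn i (rconds rho)))).

(* strong CCTRS: each R|f finite (a list, without repetitions since R is a
   set), f(l_1..l_n) and every b_j linear *)
Definition strong_CCTRS : Prop :=
  is_CCTRS /\
  forall f, NoDup (Rf f) /\
    forall rho, In rho (Rf f) ->
      linear (rlhs f rho) /\ Forall (fun c => linear (snd c)) (rconds rho).

Definition label : fterm -> gterm := fmap (fun f => (f, repeat true (m f))).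
Definition erase : gterm -> fterm := fmap fst.

(* labeled normal form: only constructors, symbols f_emptyset, variables *)
Definition lnf (t : gterm) : Prop :=
  Forall (fun g => snd g = repeat false (m (fst g))) (funs t).

Definition cnd_a (rho : crule F) (j : nat) : fterm := fst (nth j (rconds rho) (Var 0, Var 0)).
Definition cnd_b (rho : crule F) (j : nat) : fterm := snd (nth j (rconds rho) (Var 0, Var 0)).
(* NB: in the Rocq encoding the rule rho^f_{i+1} has 0-based index i, and the
   condition a_{j+1} ~ b_{j+1} has 0-based index j. *)

Inductive lstep : gterm -> gterm -> Prop :=
| ls_ctx g pre s t post :
    lstep s t -> lstep (Fun g (pre ++ s :: post)) (Fun g (pre ++ t :: post))
| ls_nomatch f lab i rho ss us sg :
    nth_error (Rf f) i = Some rho ->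
    nth i lab false = true ->
    Forall lnf us ->
    linear_list us ->
    disjoint (flat_map vars us) (vars (rlhs f rho)) ->
    map (subst sg) us = ss ->
    ~ unifiable (Fun f (map erase us)) (rlhs f rho) ->
    lstep (Fun (f, lab) ss) (Fun (f, clear_at lab i) ss)
| ls_apply f lab i rho sg :
    nth_error (Rf f) i = Some rho ->
    nth i lab false = true ->
    (forall j, j < length (rconds rho) ->
       lsteps (subst sg (label (cnd_a rho j))) (subst sg (label (cnd_b rho j)))) ->
    lstep (Fun (f, lab) (map (fun l => subst sg (label l)) (rargs rho)))
          (subst sg (label (rrhs rho)))
(* case (ii), j < k: condition j+1 fails *)
| ls_condfail f lab i rho sg j u tau :
    nth_error (Rf f) i = Some rho ->
    nth i lab false = true ->
    j < length (rconds rho) ->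
    (forall j', j' < j ->
       lsteps (subst sg (label (cnd_a rho j'))) (subst sg (label (cnd_b rho j')))) ->
    lnf u -> linear u ->
    disjoint (vars u) (vars (cnd_b rho j)) ->
    lsteps (subst sg (label (cnd_a rho j))) (subst tau u) ->
    ~ unifiable (erase u) (cnd_b rho j) ->
    lstep (Fun (f, lab) (map (fun l => subst sg (label l)) (rargs rho)))
          (Fun (f, clear_at lab i) (map (fun l => subst sg (label l)) (rargs rho)))
with lsteps : gterm -> gterm -> Prop :=
| lsteps_refl s : lsteps s s
| lsteps_step s t u : lstep s t -> lsteps t u -> lsteps s u.

Definition lcstep (s t : gterm) : Prop :=
  exists f lab i rho sg j,
    nth_error (Rf f) i = Some rho /\
    nth i lab false = true /\
    j < length (rconds rho) /\
    (forall j', j' < j ->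
       lsteps (subst sg (label (cnd_a rho j'))) (subst sg (label (cnd_b rho j')))) /\
    subterm_eq (Fun (f, lab) (map (fun l => subst sg (label l)) (rargs rho))) s /\
    t = subst sg (label (cnd_a rho j)).

Definition linf (s : gterm) : Prop :=
  exists seq : nat -> gterm, seq 0 = s /\
    forall k, lstep (seq k) (seq (S k)) \/ lcstep (seq k) (seq (S k)).

Definition bot : hterm := Fun HBot [].
Definition top : hterm := Fun HTop [].

Fixpoint xi (c : Hsym F) (t : fterm) : hterm :=
  match t with
  | Var x => Var x
  | Fun f ts => Fun (HF f) (map (xi c) ts ++ repeat (Fun c []) (m f))
  end.

(* constructor terms of F seen as terms of H (identity embedding) *)
Definition emb : fterm -> hterm := fmap HF.

(* AP(t) (the variables are chosen freely here; freshness/distinctness is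
   imposed through linearity of the left-hand sides of Xi(R), see below) *)
Inductive AP : fterm -> hterm -> Prop :=
| AP_sym f ts g xs :
    ((is_constructor g /\ g <> f) \/ ~ is_constructor g) ->
    length xs = arity g ->
    AP (Fun f ts) (Fun (HF g) (map Var xs ++ repeat bot (m g)))
| AP_arg f ts i u xs :
    1 <= i <= length ts ->
    length xs = length ts ->
    AP (nth (i - 1) ts (Var 0)) u ->
    AP (Fun f ts) (Fun (HF f) (ins (map Var xs) i [u])).

Definition Xi_rule (l r : hterm) : Prop :=
  linear l /\
  exists f i rho xv,
    1 <= i <= m f /\ nth_error (Rf f) (i - 1) = Some rho /\ length xv = m f /\
    let X := map Var xv in
    let L := map emb (rargs rho) in
    let k := length (rconds rho) in
    let a j := fst (nth (j - 1) (rconds rho) (Var 0, Var 0)) in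
    let b j := snd (nth (j - 1) (rconds rho) (Var 0, Var 0)) in
    let B j := map (fun c => emb (snd c)) (firstn j (rconds rho)) in
    (* (1) *)
    (k = 0 /\ l = Fun (HF f) (L ++ ins X i [top]) /\ r = xi HTop (rrhs rho)) \/
    (* (2) *)
    (k > 0 /\ l = Fun (HF f) (L ++ ins X i [top]) /\
       r = Fun (HAux f i 1) (L ++ ins X i [xi HTop (a 1)])) \/
    (* (3) *)
    (k > 0 /\ l = Fun (HAux f i k) (L ++ ins X i (B k)) /\ r = xi HTop (rrhs rho)) \/
    (* (4) *)
    (exists j, 1 <= j < k /\
       l = Fun (HAux f i j) (L ++ ins X i (B j)) /\
       r = Fun (HAux f i (S j)) (L ++ ins X i (B j ++ [xi HTop (a (S j))]))) \/
    (* (5) *)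
    (exists j v, 1 <= j <= k /\ AP (b j) v /\
       l = Fun (HAux f i j) (L ++ ins X i (B (j - 1) ++ [v])) /\
       r = Fun (HF f) (L ++ ins X i [bot])) \/
    (* (6) *)
    (exists yv j v, length yv = arity f /\ 1 <= j <= arity f /\
       AP (nth (j - 1) (rargs rho) (Var 0)) v /\
       l = Fun (HF f) (ins (map Var yv) j [v] ++ ins X i [top]) /\
       r = Fun (HF f) (ins (map Var yv) j [v] ++ ins X i [bot])).

(* replacement map mu, on 0-based argument indices *)
Definition active (g : Hsym F) (k : nat) : Prop :=
  match g with
  | HF f => k < arity f                        (* mu(f) = {1..n} *)
  | HAux f i j => k = arity f + i + j - 2      (* mu(f_i^j) = {n+i+j-1} *)
  | _ => False
  end.

Inductive cstep : hterm -> hterm -> Prop :=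
| cs_root l r sg : Xi_rule l r -> cstep (subst sg l) (subst sg r)
| cs_ctx g pre s t post :
    active g (length pre) -> cstep s t ->
    cstep (Fun g (pre ++ s :: post)) (Fun g (pre ++ t :: post)).

Definition nonterminating (s : hterm) : Prop :=
  exists seq : nat -> hterm, seq 0 = s /\ forall k, cstep (seq k) (seq (S k)).

Definition is_bt (c : hterm) : Prop := c = bot \/ c = top.

Inductive proper : hterm -> Prop :=
| pr_var x : proper (Var x)
| pr_fun f ss cs :
    length ss = arity f -> Forall proper ss ->
    length cs = m f -> Forall is_bt cs ->
    proper (Fun (HF f) (ss ++ cs)).

Definition is_top (c : hterm) : bool :=
  match c with Fun HTop [] => true | _ => false end.

Fixpoint zeta (t : hterm) : gterm :=
  match t with
  | Var x => Var x
  | Fun (HF f) ts =>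
      Fun (f, map is_top (skipn (arity f) ts)) (firstn (arity f) (map zeta ts))
  | Fun _ _ => Var 0  (* not reached on proper terms *)
  end.

Definition ground {S : Type} (t : term S) : Prop := vars t = [].

End System.

(* Extend ζ⁻ to the auxiliary symbols: f_i^j(ℓ⃗σ, X⃗, b₁σ, …, b_{j-1}σ, c) is read as the
   labeled term f_R(label(ℓ⃗)ζσ) whose label R still contains ρ_i.  Along Ξ(R)-reductions from
   proper terms one maintains an invariant: each such subterm records an instance of ρ_i whose
   first j-1 conditions hold for ⇀*, and whose condition slot c is ⇀*-reachable from
   label(a_j)σ.  Under the invariant every Ξ(R)-step is either simulated by one ⇀-step
   (rules (1), (3), (5), (6) and steps below defined symbols) or is silent (rules (2), (4) and
   steps inside a condition slot).  If the image has an instance whose slot is non-terminating,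
   a ⇀_▷-step followed by ⇀* reaches the image of that slot.  Otherwise silent steps are well
   founded, since (2) and (4) decrease the number of pending conditions and steps inside a
   slot are steps of a terminating term; so an infinite reduction contains a simulated step.
   Either way a non-terminating invariant term leads by ⇀ ∪ ⇀_▷ to the image of another one,
   and dependent choice yields the infinite sequence. *)

From Pilot Require Import Defs.
From Stdlib Require Import List Arith Lia Relations Classical ClassicalEpsilon.
Import ListNotations.

Lemma app_inj_length {A} (a b c d : list A) :
  length a = length c -> a ++ b = c ++ d -> a = c /\ b = d.
Proof.
  revert c; induction a as [|x a IH]; intros [|y c] Hl He; simpl in *; try lia.
  - auto.
  - injection He as -> He. destruct (IH c ltac:(lia) He) as [-> ->]. auto.
Qed.

Lemma app_cons_inj_length {A} (a c b d : list A) x y :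
  length a = length c -> a ++ x :: b = c ++ y :: d -> a = c /\ x = y /\ b = d.
Proof.
  intros Hl He. destruct (app_inj_length _ _ _ _ Hl He) as [-> H]. injection H; auto.
Qed.

Lemma app_cons_prefix {A} (pre post ss cs : list A) s :
  length pre < length ss -> pre ++ s :: post = ss ++ cs ->
  exists post1, ss = pre ++ s :: post1 /\ post = post1 ++ cs.
Proof.
  intros Hl E. apply app_eq_app in E as [l' [[E1 E2]|[E1 E2]]].
  - subst. rewrite length_app in Hl. lia.
  - destruct l' as [|y l']; simpl in *.
    + subst. rewrite app_nil_r in Hl. lia.
    + injection E2 as -> ->. exists l'. auto.
Qed.

Lemma firstn_app_length {A} (a b : list A) : firstn (length a) (a ++ b) = a.
Proof. induction a; simpl; congruence. Qed.

Lemma skipn_app_length2 {A} (a b c : list A) : skipn (length a + length b) (a ++ b ++ c) = c.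
Proof. induction a; simpl; auto. induction b; simpl; auto. Qed.

Lemma firstn_S_snoc {A} (l : list A) j d :
  j < length l -> firstn (S j) l = firstn j l ++ [nth j l d].
Proof.
  revert j; induction l as [|x l IH]; intros j Hj; simpl in *; [lia|].
  destruct j; simpl; auto. rewrite IH by lia. reflexivity.
Qed.

Lemma in_firstn_le {A} (l : list A) a b x : a <= b -> In x (firstn a l) -> In x (firstn b l).
Proof.
  intros H Hx. rewrite <- (firstn_skipn a (firstn b l)). apply in_or_app. left.
  rewrite firstn_firstn. replace (Nat.min a b) with a by lia. auto.
Qed.

Lemma nth_In_firstn {A} (l : list A) j n d :
  j < n -> j < length l -> In (nth j l d) (firstn n l).
Proof.
  intros H1 H2. replace (nth j l d) with (nth j (firstn n l) d).
  - apply nth_In. rewrite length_firstn. lia.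
  - rewrite nth_firstn. destruct (Nat.ltb_spec j n); [reflexivity|lia].
Qed.

Lemma firstn_seq k N n : firstn k (seq N n) = seq N (Nat.min k n).
Proof.
  revert k N; induction n; intros k N; simpl.
  - rewrite firstn_nil, Nat.min_0_r. reflexivity.
  - destruct k; simpl; auto. rewrite IHn. reflexivity.
Qed.

Lemma map_nth_seq {B} (ts : list B) N d :
  map (fun x => nth (x - N) ts d) (seq N (length ts)) = ts.
Proof.
  revert N; induction ts as [|y ts IH]; intros N; simpl; auto.
  rewrite Nat.sub_diag. f_equal. rewrite <- (IH (S N)) at 2. apply map_ext_in.
  intros x Hx. apply in_seq in Hx. replace (x - N) with (S (x - S N)) by lia. reflexivity.
Qed.

Lemma le_list_max (l : list nat) x : In x l -> x <= list_max l.
Proof.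
  intros H. assert (Hl := proj1 (list_max_le l (list_max l)) (le_n _)).
  rewrite Forall_forall in Hl. auto.
Qed.

Lemma clear_at_middle (l1 l2 : list bool) b :
  clear_at (l1 ++ b :: l2) (length l1) = l1 ++ false :: l2.
Proof. induction l1; simpl; auto. rewrite IHl1. reflexivity. Qed.

Lemma length_ins {A} (xs us : list A) i :
  1 <= i <= length xs -> length (ins xs i us) = length xs - 1 + length us.
Proof.
  intros Hi. unfold ins. rewrite !length_app, length_firstn, length_skipn. lia.
Qed.

Lemma map_ins {A B} (f : A -> B) xs i us :
  map f (ins xs i us) = ins (map f xs) i (map f us).
Proof. unfold ins. rewrite !map_app, firstn_map, skipn_map. reflexivity. Qed.

Lemma ins_congr {A} (X1 X2 : list A) i M :
  firstn (i-1) X1 = firstn (i-1) X2 -> skipn i X1 = skipn i X2 -> ins X1 i M = ins X2 i M.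
Proof. unfold ins. intros -> ->. reflexivity. Qed.

Lemma ins_inj {A} (X1 X2 M1 M2 : list A) i :
  length X1 = length X2 -> 1 <= i <= length X1 -> length M1 = length M2 ->
  ins X1 i M1 = ins X2 i M2 ->
  firstn (i-1) X1 = firstn (i-1) X2 /\ M1 = M2 /\ skipn i X1 = skipn i X2.
Proof.
  unfold ins; intros HX Hi HM He.
  apply app_inj_length in He as [H1 H2].
  - apply app_inj_length in H2 as [H3 H4]; auto.
  - rewrite !length_firstn. lia.
Qed.

Lemma ins_ins {A} (X : list A) i a M :
  1 <= i <= length X -> ins (ins X i [a]) i M = ins X i M.
Proof.
  intros Hi. apply ins_congr; unfold ins.
  - rewrite firstn_app, length_firstn.
    replace (i - 1 - Nat.min (i - 1) (length X)) with 0 by lia.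
    rewrite firstn_O, app_nil_r, firstn_firstn. f_equal. lia.
  - rewrite skipn_app, length_firstn, skipn_all2 by (rewrite length_firstn; lia). simpl.
    replace (i - Nat.min (i - 1) (length X)) with 1 by lia. reflexivity.
Qed.

Lemma nth_ins_middle {A} (X : list A) i a d :
  1 <= i <= length X -> nth (i-1) (ins X i [a]) d = a.
Proof.
  intros Hi. unfold ins. rewrite app_nth2; rewrite length_firstn; [|lia].
  replace (i - 1 - Nat.min (i - 1) (length X)) with 0 by lia. reflexivity.
Qed.

Lemma Forall_ins {A} (P : A -> Prop) X Y i M :
  Forall P (firstn (i-1) Y) -> Forall P (skipn i Y) -> Forall P M ->
  firstn (i-1) X = firstn (i-1) Y -> skipn i X = skipn i Y -> Forall P (ins X i M).
Proof.
  intros H1 H2 H3 E1 E2. unfold ins. rewrite E1, E2.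
  apply Forall_app; split; auto. apply Forall_app; split; auto.
Qed.

Lemma Forall_ins_inv {A} (P : A -> Prop) X i M :
  Forall P (ins X i M) -> Forall P (firstn (i-1) X) /\ Forall P M /\ Forall P (skipn i X).
Proof.
  unfold ins; intros H. apply Forall_app in H as [H1 H2]. apply Forall_app in H2. tauto.
Qed.

Lemma Forall_firstn {A} (P : A -> Prop) n l : Forall P l -> Forall P (firstn n l).
Proof. intros H. rewrite <- (firstn_skipn n l) in H. apply Forall_app in H. tauto. Qed.

Lemma Forall_skipn {A} (P : A -> Prop) n l : Forall P l -> Forall P (skipn n l).
Proof. intros H. rewrite <- (firstn_skipn n l) in H. apply Forall_app in H. tauto. Qed.

Section TermInd.
Variable S : Type.
Variable P : term S -> Prop.
Hypothesis HVar : forall x, P (Var x).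
Hypothesis HFun : forall f ts, Forall P ts -> P (Fun f ts).

Fixpoint term_ind' (t : term S) : P t :=
  match t with
  | Var x => HVar x
  | Fun f ts => HFun f ts ((fix go (l : list (term S)) : Forall P l :=
      match l with
      | [] => Forall_nil _
      | u :: l' => Forall_cons _ (term_ind' u) (go l')
      end) ts)
  end.
End TermInd.

Lemma subst_ext_vars {S} (s1 s2 : nat -> term S) t :
  (forall x, In x (vars t) -> s1 x = s2 x) -> subst s1 t = subst s2 t.
Proof.
  induction t as [x|f ts IH] using term_ind'; simpl; intros H.
  - apply H; simpl; auto.
  - f_equal. apply map_ext_in. intros u Hu. rewrite Forall_forall in IH.
    apply IH; auto. intros x Hx. apply H. apply in_flat_map. eauto.
Qed.

Lemma subst_eq_vars {S} (s1 s2 : nat -> term S) t :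
  subst s1 t = subst s2 t -> forall x, In x (vars t) -> s1 x = s2 x.
Proof.
  induction t as [x|f ts IH] using term_ind'; simpl; intros H y Hy.
  - destruct Hy as [->|[]]; auto.
  - injection H as H. apply in_flat_map in Hy as [u [Hu Hy]].
    rewrite Forall_forall in IH. apply (IH u Hu); auto.
    apply (proj1 map_ext_in_iff H); auto.
Qed.

Lemma flat_map_map {A B C} (f : B -> list C) (g : A -> B) l :
  flat_map f (map g l) = flat_map (fun x => f (g x)) l.
Proof. induction l; simpl; congruence. Qed.

Lemma vars_fmap {A B} (h : A -> B) t : vars (fmap h t) = vars t.
Proof.
  induction t as [x|f ts IH] using term_ind'; simpl; auto.
  rewrite flat_map_map. rewrite Forall_forall in IH.
  induction ts as [|u ts IHts]; simpl; auto.
  rewrite IH by (left; auto). f_equal. apply IHts. intros; apply IH; right; auto.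
Qed.

Lemma flat_map_vars_Var {S} (l : list nat) : flat_map vars (map (@Var S) l) = l.
Proof. induction l; simpl; congruence. Qed.

Lemma flat_map_funs_Var {S} (l : list nat) : flat_map funs (map (@Var S) l) = [].
Proof. induction l; simpl; congruence. Qed.

Lemma unifiable_Fun_inv {S} (f g : S) ss ts :
  unifiable (Fun f ss) (Fun g ts) -> f = g.
Proof. intros [th H]. simpl in H. congruence. Qed.

Lemma unifiable_Fun_nth {S} (f g : S) ss ts k d :
  unifiable (Fun f ss) (Fun g ts) -> unifiable (nth k ss d) (nth k ts d).
Proof.
  intros [th H]. simpl in H. injection H as _ H. exists th.
  rewrite <- (map_nth (subst th) ss d), <- (map_nth (subst th) ts d), H. reflexivity.
Qed.

Lemma subterm_eq_trans {S} (a b c : term S) :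
  subterm_eq a b -> subterm_eq b c -> subterm_eq a c.
Proof. intros H1 H2. induction H2; auto. econstructor; eauto. Qed.

(** * Infinite sequences and accessibility *)

Lemma dependent_choice_seq {A} (P : A -> Prop) (R : A -> A -> Prop) :
  (forall a, P a -> exists b, R a b /\ P b) ->
  forall a0, P a0 -> exists s : nat -> A, s 0 = a0 /\ forall k, R (s k) (s (S k)).
Proof.
  intros Hstep a0 H0.
  pose (next := fun x : sig P =>
    let e := constructive_indefinite_description _ (Hstep (proj1_sig x) (proj2_sig x)) in
    exist P (proj1_sig e) (proj2 (proj2_sig e))).
  exists (fun k => proj1_sig (Nat.iter k next (exist P a0 H0))). split; auto.
  intros k. simpl. unfold next at 1. simpl.
  destruct (constructive_indefinite_description _ _) as [b [Hb1 Hb2]]. exact Hb1.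
Qed.

Lemma not_Acc_seq {A} (R : A -> A -> Prop) a : ~ Acc (fun b a => R a b) a ->
  exists s : nat -> A, s 0 = a /\ forall k, R (s k) (s (S k)).
Proof.
  apply (dependent_choice_seq (fun x => ~ Acc (fun b a => R a b) x) R).
  intros x Hx. apply NNPP. intros Hn. apply Hx. constructor. intros y Hy.
  apply NNPP. intros Hy'. apply Hn. eauto.
Qed.

Inductive list_step {A} (R : A -> A -> Prop) : list A -> list A -> Prop :=
| list_step_here pre a b post : R a b -> list_step R (pre ++ a :: post) (pre ++ b :: post).

Lemma Acc_list_step_cons {A} (R : A -> A -> Prop) a : Acc (fun y x => R x y) a ->
  forall l, Acc (fun y x => list_step R x y) l -> Acc (fun y x => list_step R x y) (a :: l).
Proof.
  induction 1 as [a Ha IHa]. intros l Hl. induction Hl as [l Hl IHl].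
  constructor. intros l2 Hs. inversion Hs as [pre x y post Hxy E1 E2]; subst.
  destruct pre as [|z pre]; simpl in *.
  - injection E1 as -> ->. apply IHa; auto. constructor; auto.
  - injection E1 as -> E. subst l. apply IHl. constructor. auto.
Qed.

Lemma Acc_list_step {A} (R : A -> A -> Prop) l : Forall (Acc (fun y x => R x y)) l ->
  Acc (fun y x => list_step R x y) l.
Proof.
  induction 1 as [|a l Ha Hl IH].
  - constructor. intros y H. inversion H. destruct pre; discriminate.
  - apply Acc_list_step_cons; auto.
Qed.

Section Simulation.
Variable F : Type.
Variable arity : F -> nat.
Variable Rf : F -> list (crule F).
Hypothesis HC : is_CCTRS F arity Rf.

Local Notation hterm := (term (Hsym F)).
Local Notation gterm := (term (F * list bool)).
Local Notation fterm := (term F).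
Local Notation m := (m F Rf).
Local Notation xi := (xi F Rf).
Local Notation emb := (emb F).
Local Notation label := (label F Rf).
Local Notation erase := (erase F).
Local Notation lnf := (lnf F Rf).
Local Notation wf := (wf F arity).
Local Notation cterm := (cterm F Rf).
Local Notation is_constructor := (is_constructor F Rf).
Local Notation cstep := (cstep F arity Rf).
Local Notation lstep := (lstep F Rf).
Local Notation lsteps := (lsteps F Rf).
Local Notation lcstep := (lcstep F Rf).
Local Notation Xi_rule := (Xi_rule F arity Rf).
Local Notation AP := (AP F arity Rf).
Local Notation is_bt := (is_bt F).
Local Notation bot := (bot F).
Local Notation top := (top F).
Local Notation is_top := (is_top F).
Local Notation cnd_a := (cnd_a F).
Local Notation cnd_b := (cnd_b F).
Local Notation rlhs := (rlhs F).
Local Notation nonterminating := (nonterminating F arity Rf).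

(* [lia] treats [length] at [list (Defs.hterm F)] and at [list hterm] as different atoms. *)
Ltac nlia := unfold Defs.hterm, Defs.gterm, Defs.fterm in *; lia.

Section Rule.
Variables (f : F) (rho : crule F).
Hypothesis Hrho : In rho (Rf f).

Lemma CCTRS_rule :
  length (rargs rho) = arity f /\
  Forall wf (rargs rho) /\ wf (rrhs rho) /\
  Forall (fun c => wf (fst c) /\ wf (snd c)) (rconds rho) /\
  Forall cterm (rargs rho) /\
  Forall (fun c => cterm (snd c)) (rconds rho) /\
  incl (vars (rrhs rho))
       (vars (rlhs f rho) ++ flat_map (fun c => vars (snd c)) (rconds rho)) /\
  (forall i, i < length (rconds rho) ->
     incl (vars (cnd_a rho i))
          (vars (rlhs f rho) ++ flat_map (fun c => vars (snd c)) (firstn i (rconds rho)))).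
Proof. destruct (HC f rho Hrho) as (?&?&?&?&?&?&_&?&?). tauto. Qed.

Lemma length_rargs : length (rargs rho) = arity f.
Proof. apply CCTRS_rule. Qed.

Lemma wf_rargs : Forall wf (rargs rho).
Proof. apply CCTRS_rule. Qed.

Lemma cterm_rargs : Forall cterm (rargs rho).
Proof. apply CCTRS_rule. Qed.

Lemma wf_rrhs : wf (rrhs rho).
Proof. apply CCTRS_rule. Qed.

Lemma wf_rarg j : j < arity f -> wf (nth j (rargs rho) (Var 0)).
Proof.
  intros Hj. assert (H := wf_rargs). rewrite Forall_forall in H.
  apply H, nth_In. rewrite length_rargs. lia.
Qed.

Lemma cterm_rarg j : j < arity f -> cterm (nth j (rargs rho) (Var 0)).
Proof.
  intros Hj. assert (H := cterm_rargs). rewrite Forall_forall in H.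
  apply H, nth_In. rewrite length_rargs. lia.
Qed.

Lemma wf_cnd_a j : j < length (rconds rho) -> wf (cnd_a rho j).
Proof.
  intros Hj. destruct CCTRS_rule as (_&_&_&H&_). rewrite Forall_forall in H.
  apply H, nth_In, Hj.
Qed.

Lemma wf_cnd_b j : j < length (rconds rho) -> wf (cnd_b rho j).
Proof.
  intros Hj. destruct CCTRS_rule as (_&_&_&H&_). rewrite Forall_forall in H.
  apply H, nth_In, Hj.
Qed.

Lemma cterm_cnd_b j : j < length (rconds rho) -> cterm (cnd_b rho j).
Proof.
  intros Hj. destruct CCTRS_rule as (_&_&_&_&_&H&_). rewrite Forall_forall in H.
  apply H, nth_In, Hj.
Qed.

Lemma vars_rrhs :
  incl (vars (rrhs rho))
       (flat_map vars (rargs rho) ++ flat_map (fun c => vars (snd c)) (rconds rho)).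
Proof. apply CCTRS_rule. Qed.

Lemma vars_cnd_a j : j < length (rconds rho) ->
  incl (vars (cnd_a rho j))
       (flat_map vars (rargs rho) ++ flat_map (fun c => vars (snd c)) (firstn j (rconds rho))).
Proof. apply CCTRS_rule. Qed.

End Rule.

Lemma cterm_Fun f ts : cterm (Fun f ts) -> is_constructor f /\ Forall cterm ts.
Proof.
  unfold Defs.cterm; simpl. intros H. inversion H; subst. split; auto.
  apply Forall_forall. intros t Ht. apply Forall_forall. intros x Hx.
  rewrite Forall_forall in H3. apply H3. apply in_flat_map; eauto.
Qed.

Lemma wf_Fun f ts : wf (Fun f ts) -> length ts = arity f /\ Forall wf ts.
Proof. intros H; inversion H; auto. Qed.

Lemma m_constructor f : is_constructor f -> m f = 0.
Proof. unfold Defs.is_constructor, Defs.m. intros ->. reflexivity. Qed.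

Lemma emb_xi c t : cterm t -> emb t = xi c t.
Proof.
  induction t as [x|f ts IH] using term_ind'; simpl; intros H; auto.
  apply cterm_Fun in H as [H1 H2]. rewrite m_constructor, app_nil_r by auto.
  change (emb (Fun f ts)) with (Fun (HF f) (map emb ts)). f_equal.
  apply map_ext_in. intros u Hu. rewrite Forall_forall in *. auto.
Qed.

Lemma map_subst_repeat (sg : nat -> hterm) c k :
  subst sg c = c -> map (subst sg) (repeat c k) = repeat c k.
Proof. intros H. induction k; simpl; congruence. Qed.

Lemma map_is_top_repeat_top k : map is_top (repeat top k) = repeat true k.
Proof. induction k; simpl; congruence. Qed.

Lemma map_is_top_repeat_bot k : map is_top (repeat bot k) = repeat false k.
Proof. induction k; simpl; congruence. Qed.

Lemma map_is_top_ins_top (X : list hterm) i :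
  map is_top (ins X i [top]) = map is_top (firstn (i-1) X) ++ true :: map is_top (skipn i X).
Proof. unfold ins. rewrite !map_app. reflexivity. Qed.

Lemma nth_is_top_ins_top (X : list hterm) i : 1 <= i <= length X ->
  nth (i-1) (map is_top (ins X i [top])) false = true.
Proof.
  intros Hi. rewrite map_is_top_ins_top.
  rewrite app_nth2; rewrite length_map, length_firstn; [|lia].
  replace (i - 1 - Nat.min (i - 1) (length X)) with 0 by lia. reflexivity.
Qed.

Lemma clear_at_is_top_ins_top (X : list hterm) i : 1 <= i <= length X ->
  clear_at (map is_top (ins X i [top])) (i-1) = map is_top (ins X i [bot]).
Proof.
  intros Hi. rewrite map_is_top_ins_top.
  replace (i-1) with (length (map is_top (firstn (i-1) X))) at 2
    by (rewrite length_map, length_firstn; lia).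
  rewrite clear_at_middle. unfold ins. rewrite !map_app. reflexivity.
Qed.

(* The label of f_i^j keeps the condition bits outside the slots b₁…b_{j-1}, c, and sets bit i. *)
Definition aux_label (f : F) (i j : nat) (ts : list hterm) : list bool :=
  let rest := skipn (arity f) ts in
  map is_top (firstn (i-1) rest) ++ true :: map is_top (skipn (i-1+j) rest).

Fixpoint zeta_ext (t : hterm) : gterm :=
  match t with
  | Var x => Var x
  | Fun (HF f) ts => Fun (f, map is_top (skipn (arity f) ts)) (firstn (arity f) (map zeta_ext ts))
  | Fun (HAux f i j) ts => Fun (f, aux_label f i j ts) (firstn (arity f) (map zeta_ext ts))
  | Fun _ _ => Var 0
  end.

Definition zeta_ext_subst (sg : nat -> hterm) : nat -> gterm := fun x => zeta_ext (sg x).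

Lemma zeta_ext_HF f ss cs : length ss = arity f ->
  zeta_ext (Fun (HF f) (ss ++ cs)) = Fun (f, map is_top cs) (map zeta_ext ss).
Proof.
  intros H. simpl. rewrite <- H, skipn_app, skipn_all, Nat.sub_diag. simpl.
  rewrite map_app, firstn_app, length_map, Nat.sub_diag, firstn_O, app_nil_r.
  rewrite firstn_all2; [reflexivity| rewrite length_map; lia].
Qed.

Lemma zeta_ext_HAux f i j ss X B c : length ss = arity f -> 1 <= i <= length X ->
  length B = j - 1 -> 1 <= j ->
  zeta_ext (Fun (HAux f i j) (ss ++ ins X i (B ++ [c]))) =
  Fun (f, map is_top (ins X i [top])) (map zeta_ext ss).
Proof.
  intros H Hi HB Hj. simpl. f_equal.
  - unfold aux_label. rewrite <- H, skipn_app, skipn_all, Nat.sub_diag. simpl.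
    rewrite map_is_top_ins_top. unfold ins.
    replace (i - 1 + j) with (length (firstn (i-1) X) + length (B ++ [c]))
        by (rewrite length_firstn, length_app; simpl; lia).
    rewrite skipn_app_length2.
    replace (i-1) with (length (firstn (i-1) X)) at 1 by (rewrite length_firstn; lia).
    rewrite firstn_app_length. reflexivity.
  - rewrite map_app, firstn_app, length_map, <- H, Nat.sub_diag, firstn_O, app_nil_r.
    rewrite firstn_all2; [reflexivity| rewrite length_map; lia].
Qed.

Lemma zeta_ext_xi sg t : wf t ->
  zeta_ext (subst sg (xi HTop t)) = subst (zeta_ext_subst sg) (label t).
Proof.
  induction t as [x|f ts IH] using term_ind'; intros Hw; [reflexivity|].
  apply wf_Fun in Hw as [Hl Hw].
  change (subst sg (xi HTop (Fun f ts))) with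
    (Fun (HF f) (map (subst sg) (map (xi HTop) ts ++ repeat top (m f)))).
  change (label (Fun f ts)) with (Fun (f, repeat true (m f)) (map label ts)).
  rewrite map_app, map_subst_repeat by reflexivity.
  rewrite zeta_ext_HF by (rewrite !length_map; auto).
  rewrite map_is_top_repeat_top. simpl. f_equal. rewrite !map_map. apply map_ext_in.
  intros u Hu. rewrite Forall_forall in *. apply IH; auto.
Qed.

Lemma zeta_ext_emb sg t : cterm t -> wf t ->
  zeta_ext (subst sg (emb t)) = subst (zeta_ext_subst sg) (label t).
Proof. intros H1 H2. rewrite (emb_xi HTop) by auto. apply zeta_ext_xi; auto. Qed.

Lemma subst_label_ext sg1 sg2 (t : fterm) :
  (forall x, In x (vars t) -> sg1 x = sg2 x) ->
  subst (zeta_ext_subst sg1) (label t) = subst (zeta_ext_subst sg2) (label t).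
Proof.
  intros H. apply subst_ext_vars. unfold Defs.label. rewrite vars_fmap.
  intros x Hx. unfold zeta_ext_subst. rewrite H; auto.
Qed.

(** * Argument patterns *)

Lemma lnf_Fun_constructor f ts : is_constructor f -> Forall lnf ts -> lnf (Fun (f, []) ts).
Proof.
  unfold Defs.lnf. intros Hc Hts. simpl. constructor.
  - simpl. rewrite m_constructor by auto. reflexivity.
  - rewrite Forall_forall in Hts |- *. intros g Hg.
    apply in_flat_map in Hg as [t [Ht Hg]]. specialize (Hts t Ht).
    rewrite Forall_forall in Hts. auto.
Qed.

Lemma Forall_lnf_ins_Var (u : gterm) l j : lnf u -> Forall lnf (ins (map Var l) j [u]).
Proof.
  intros Hu. unfold ins. rewrite firstn_map, skipn_map.
  assert (HV : forall l', Forall lnf (map (@Var _) l')).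
  { intros l'. apply Forall_forall. intros w Hw. apply in_map_iff in Hw as [x [<- _]].
    constructor. }
  apply Forall_app; split; [|apply Forall_app; split]; auto.
Qed.

Lemma vars_ins_seq (u : gterm) N n j :
  NoDup (vars u) -> (forall x, In x (vars u) -> N + n <= x) -> 1 <= j <= n ->
  NoDup (flat_map vars (ins (map Var (seq N n)) j [u])) /\
  (forall x, In x (flat_map vars (ins (map Var (seq N n)) j [u])) -> N <= x).
Proof.
  intros Hnd Hge Hj. unfold ins.
  rewrite !flat_map_app, firstn_map, skipn_map, !flat_map_vars_Var.
  simpl. rewrite app_nil_r, firstn_seq, skipn_seq. split.
  - apply NoDup_app; [apply seq_NoDup| apply NoDup_app; [auto|apply seq_NoDup|]|].
    + intros x Hx Hx'. apply in_seq in Hx'. apply Hge in Hx. lia.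
    + intros x Hx Hx'. apply in_seq in Hx. apply in_app_or in Hx' as [Hx'|Hx'].
      * apply Hge in Hx'. lia.
      * apply in_seq in Hx'. lia.
  - intros x Hx. apply in_app_or in Hx as [Hx|Hx]; [apply in_seq in Hx; lia|].
    apply in_app_or in Hx as [Hx|Hx]; [apply Hge in Hx; lia|apply in_seq in Hx; lia].
Qed.

Definition seq_subst (N : nat) (ts : list gterm) (tau : nat -> gterm) : nat -> gterm :=
  fun x => if x <? N + length ts then nth (x - N) ts (Var 0) else tau x.

Lemma map_seq_subst_Var N ts tau :
  map (subst (seq_subst N ts tau)) (map Var (seq N (length ts))) = ts.
Proof.
  rewrite map_map. rewrite <- (map_nth_seq ts N (Var 0)) at 2. apply map_ext_in. intros x Hx.
  apply in_seq in Hx. unfold seq_subst. simpl.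
  destruct (Nat.ltb_spec x (N + length ts)); [reflexivity|lia].
Qed.

Lemma map_seq_subst_ins N ts tau (u : gterm) j :
  (forall x, In x (vars u) -> N + length ts <= x) ->
  map (subst (seq_subst N ts tau)) (ins (map Var (seq N (length ts))) j [u]) =
  ins ts j [subst tau u].
Proof.
  intros Hu. rewrite map_ins, map_seq_subst_Var. simpl. do 2 f_equal.
  apply subst_ext_vars. intros x Hx. apply Hu in Hx. unfold seq_subst.
  destruct (Nat.ltb_spec x (N + length ts)); [lia|reflexivity].
Qed.

Lemma not_unifiable_ins_Var (g f : F) (u : gterm) ts l j :
  1 <= j <= length l -> ~ unifiable (erase u) (nth (j-1) ts (Var 0)) ->
  ~ unifiable (Fun g (map erase (ins (map Var l) j [u]))) (Fun f ts).
Proof.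
  intros Hj Hnu Hu. apply Hnu. apply (unifiable_Fun_nth _ _ _ _ (j-1) (Var 0)) in Hu.
  rewrite (map_nth erase _ (Var 0)), nth_ins_middle in Hu by (rewrite length_map; lia).
  exact Hu.
Qed.

Lemma AP_lnf_witness t v : AP t v -> wf t -> cterm t -> forall sg N,
  exists u tau, lnf u /\ NoDup (vars u) /\ (forall x, In x (vars u) -> N <= x) /\
    subst tau u = zeta_ext (subst sg v) /\ ~ unifiable (erase u) t.
Proof.
  induction 1 as [f ts g xs Hg Hxs | f ts i v' xs Hi Hlen HAP IH];
    intros Hw Hc sg N; apply cterm_Fun in Hc as [Hcf Hcs]; apply wf_Fun in Hw as [Hwl Hws];
    set (zs := map (zeta_ext_subst sg) xs); assert (Hzs : length zs = length xs) by apply length_map.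
  - exists (Fun (g, repeat false (m g)) (map Var (seq N (length zs)))).
    exists (seq_subst N zs (zeta_ext_subst sg)).
    split; [|split; [|split; [|split]]].
    + unfold Defs.lnf. simpl. rewrite flat_map_funs_Var. repeat constructor.
    + cbn [vars]. rewrite flat_map_vars_Var. apply seq_NoDup.
    + cbn [vars]. rewrite flat_map_vars_Var. intros x Hx. apply in_seq in Hx. lia.
    + cbn [subst]. rewrite map_app, map_subst_repeat by reflexivity.
      rewrite zeta_ext_HF by (now rewrite !length_map).
      rewrite map_is_top_repeat_bot, map_seq_subst_Var, !map_map. reflexivity.
    + intros Hu. apply unifiable_Fun_inv in Hu. simpl in Hu. subst g.
      destruct Hg as [[_ Hne]|Hnc]; auto.
  - assert (Hi' : i - 1 < length ts) by lia.
    destruct (IH (proj1 (Forall_forall _ _) Hws _ (nth_In _ _ Hi'))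
                 (proj1 (Forall_forall _ _) Hcs _ (nth_In _ _ Hi')) sg (N + length zs))
      as [u' [tau' [Hl' [Hnd' [Hge' [Hs' Hnu']]]]]].
    destruct (vars_ins_seq u' N (length zs) i Hnd' Hge' ltac:(lia)) as [Hnd Hge].
    exists (Fun (f, []) (ins (map Var (seq N (length zs))) i [u'])).
    exists (seq_subst N zs tau').
    split; [|split; [|split; [|split]]]; auto.
    + apply lnf_Fun_constructor; auto. apply Forall_lnf_ins_Var; auto.
    + cbn [subst]. rewrite map_seq_subst_ins by auto.
      rewrite <- (app_nil_r (map (subst sg) _)), zeta_ext_HF
        by (rewrite length_map, length_ins; rewrite ?length_map; simpl; lia).
      rewrite !map_ins, !map_map. simpl. rewrite Hs'. reflexivity.
    + apply (not_unifiable_ins_Var f f); [rewrite length_seq; lia|]. exact Hnu'.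
Qed.

(** * The invariant *)

Definition args_inst (sg : nat -> hterm) (ls : list fterm) : list hterm :=
  map (fun l => subst sg (emb l)) ls.

Definition cond_rhs_inst (rho : crule F) (sg : nat -> hterm) (n : nat) : list hterm :=
  map (fun cd => subst sg (emb (snd cd))) (firstn n (rconds rho)).

(* In [consistent_HAux], [j] is 1-based as in f_i^j, while [cnd_a rho (j-1)] is a_j. *)
Inductive consistent : hterm -> Prop :=
| consistent_Var x : consistent (Var x)
| consistent_bot : consistent bot
| consistent_top : consistent top
| consistent_HF f (ss cs : list hterm) :
    length ss = arity f -> Forall consistent ss -> length cs = m f -> Forall is_bt cs ->
    consistent (Fun (HF f) (ss ++ cs))
| consistent_HAux f i j rho sg (X : list hterm) (c : hterm) :
    1 <= i <= m f -> nth_error (Rf f) (i-1) = Some rho ->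
    1 <= j <= length (rconds rho) -> length X = m f -> Forall is_bt X ->
    Forall consistent (args_inst sg (rargs rho) ++ ins X i (cond_rhs_inst rho sg (j-1) ++ [c])) ->
    (forall j', j' < j - 1 ->
       lsteps (subst (zeta_ext_subst sg) (label (cnd_a rho j')))
              (subst (zeta_ext_subst sg) (label (cnd_b rho j')))) ->
    lsteps (subst (zeta_ext_subst sg) (label (cnd_a rho (j-1)))) (zeta_ext c) ->
    consistent (Fun (HAux f i j)
                  (args_inst sg (rargs rho) ++ ins X i (cond_rhs_inst rho sg (j-1) ++ [c]))).

Lemma is_bt_consistent t : is_bt t -> consistent t.
Proof. intros [->| ->]; constructor. Qed.

Lemma Forall_is_bt_consistent ts : Forall is_bt ts -> Forall consistent ts.
Proof. apply Forall_impl, is_bt_consistent. Qed.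

Lemma consistent_args g ts : consistent (Fun g ts) -> Forall consistent ts.
Proof.
  intros H; inversion H; subst; auto.
  apply Forall_app; split; auto. apply Forall_is_bt_consistent. auto.
Qed.

Lemma consistent_subst_var sg t x : consistent (subst sg t) -> In x (vars t) -> consistent (sg x).
Proof.
  induction t as [y|g ts IH] using term_ind'; simpl; intros H Hx.
  - destruct Hx as [->|[]]; auto.
  - apply consistent_args in H. apply in_flat_map in Hx as [u [Hu Hx]].
    rewrite Forall_forall in IH, H. apply (IH u Hu); auto. apply H, in_map; auto.
Qed.

Lemma consistent_xi sg t : wf t -> (forall x, In x (vars t) -> consistent (sg x)) ->
  consistent (subst sg (xi HTop t)).
Proof.
  induction t as [x|f ts IH] using term_ind'; simpl; intros Hw H.
  - apply H; simpl; auto.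
  - apply wf_Fun in Hw as [Hl Hw]. rewrite map_app, map_subst_repeat by reflexivity.
    constructor.
    + rewrite !length_map; auto.
    + rewrite Forall_forall in *. intros u Hu. apply in_map_iff in Hu as [v [<- Hv]].
      apply in_map_iff in Hv as [w [<- Hw']]. apply IH; auto.
      intros x Hx. apply H. apply in_flat_map; eauto.
    + apply repeat_length.
    + apply Forall_forall. intros u Hu. apply repeat_spec in Hu. subst. right; reflexivity.
Qed.

Lemma consistent_HF_inv f ts : consistent (Fun (HF f) ts) -> exists ss cs, ts = ss ++ cs /\
  length ss = arity f /\ Forall consistent ss /\ length cs = m f /\ Forall is_bt cs.
Proof. intros H; inversion H; subst. exists ss, cs. auto. Qed.

Lemma consistent_HF_app_inv f ss cs : length ss = arity f ->
  consistent (Fun (HF f) (ss ++ cs)) -> Forall consistent ss /\ Forall is_bt cs /\ length cs = m f.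
Proof.
  intros Hl H. apply consistent_HF_inv in H as [ss' [cs' [E [Hl' [H1 [H2 H3]]]]]].
  apply app_inj_length in E as [-> ->]; [|congruence]. auto.
Qed.

Lemma consistent_HAux_args f i j ss X M : consistent (Fun (HAux f i j) (ss ++ ins X i M)) ->
  Forall consistent ss /\ Forall consistent M.
Proof.
  intros H. apply consistent_args, Forall_app in H as [H1 H2].
  apply Forall_ins_inv in H2. tauto.
Qed.

Lemma length_args_inst sg ls : length (args_inst sg ls) = length ls.
Proof. apply length_map. Qed.

Lemma length_cond_rhs_inst rho sg n : n <= length (rconds rho) ->
  length (cond_rhs_inst rho sg n) = n.
Proof. intros. unfold cond_rhs_inst. rewrite length_map, length_firstn. lia. Qed.

Lemma cond_rhs_inst_S rho sg j : j < length (rconds rho) ->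
  cond_rhs_inst rho sg (S j) = cond_rhs_inst rho sg j ++ [subst sg (emb (cnd_b rho j))].
Proof.
  intros H. unfold cond_rhs_inst. rewrite (firstn_S_snoc _ _ (Var 0, Var 0)) by auto.
  rewrite map_app. reflexivity.
Qed.

Lemma zeta_ext_args_inst sg ls : Forall cterm ls -> Forall wf ls ->
  map zeta_ext (args_inst sg ls) = map (fun l => subst (zeta_ext_subst sg) (label l)) ls.
Proof.
  intros H1 H2. unfold args_inst. rewrite map_map. apply map_ext_in. intros l Hl.
  rewrite Forall_forall in *. apply zeta_ext_emb; auto.
Qed.

Lemma consistent_args_inst_var sg ls x :
  Forall consistent (args_inst sg ls) -> In x (flat_map vars ls) -> consistent (sg x).
Proof.
  intros H Hx. apply in_flat_map in Hx as [l [Hl Hx]]. rewrite Forall_forall in H.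
  apply (consistent_subst_var sg (emb l)).
  - apply H. apply (in_map (fun l => subst sg (emb l))); auto.
  - unfold Defs.emb. rewrite vars_fmap. auto.
Qed.

Lemma consistent_cond_rhs_inst_var rho sg n x : Forall consistent (cond_rhs_inst rho sg n) ->
  In x (flat_map (fun c => vars (snd c)) (firstn n (rconds rho))) -> consistent (sg x).
Proof.
  intros H Hx. apply in_flat_map in Hx as [l [Hl Hx]]. rewrite Forall_forall in H.
  apply (consistent_subst_var sg (emb (snd l))).
  - apply H. apply (in_map (fun cd => subst sg (emb (snd cd)))); auto.
  - unfold Defs.emb. rewrite vars_fmap. auto.
Qed.

Lemma args_inst_eq_vars sg1 sg2 ls : args_inst sg1 ls = args_inst sg2 ls ->
  forall x, In x (flat_map vars ls) -> sg1 x = sg2 x.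
Proof.
  intros H x Hx. apply in_flat_map in Hx as [l [Hl Hx]].
  apply (subst_eq_vars sg1 sg2 (emb l)).
  - apply (proj1 map_ext_in_iff H l Hl).
  - unfold Defs.emb. rewrite vars_fmap. auto.
Qed.

Lemma cond_rhs_inst_eq_vars rho sg1 sg2 n : cond_rhs_inst rho sg1 n = cond_rhs_inst rho sg2 n ->
  forall x, In x (flat_map (fun c => vars (snd c)) (firstn n (rconds rho))) -> sg1 x = sg2 x.
Proof.
  intros H x Hx. apply in_flat_map in Hx as [l [Hl Hx]].
  apply (subst_eq_vars sg1 sg2 (emb (snd l))).
  - apply (proj1 map_ext_in_iff H l Hl).
  - unfold Defs.emb. rewrite vars_fmap. auto.
Qed.

Lemma label_cnd_a_agree f rho sg1 sg2 j' n :
  In rho (Rf f) -> j' <= n -> j' < length (rconds rho) ->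
  (forall x, In x (flat_map vars (rargs rho)) -> sg1 x = sg2 x) ->
  (forall x, In x (flat_map (fun c => vars (snd c)) (firstn n (rconds rho))) -> sg1 x = sg2 x) ->
  subst (zeta_ext_subst sg1) (label (cnd_a rho j')) =
  subst (zeta_ext_subst sg2) (label (cnd_a rho j')).
Proof.
  intros Hr Hj Hk A1 A2. apply subst_label_ext. intros x Hx.
  apply (vars_cnd_a f rho Hr j' Hk) in Hx. apply in_app_or in Hx as [Hx|Hx]; auto.
  apply A2. apply in_flat_map in Hx as [y [Hy Hx]]. apply in_flat_map.
  exists y; split; auto. eapply in_firstn_le; eauto.
Qed.

Lemma label_cnd_b_agree rho sg1 sg2 j' n :
  j' < n -> j' < length (rconds rho) ->
  (forall x, In x (flat_map (fun c => vars (snd c)) (firstn n (rconds rho))) -> sg1 x = sg2 x) ->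
  subst (zeta_ext_subst sg1) (label (cnd_b rho j')) =
  subst (zeta_ext_subst sg2) (label (cnd_b rho j')).
Proof.
  intros Hj Hk A2. apply subst_label_ext. intros x Hx. apply A2.
  apply in_flat_map. exists (nth j' (rconds rho) (Var 0, Var 0)). split; auto.
  apply nth_In_firstn; auto.
Qed.

(* The matcher recorded in the derivation of [consistent] and the matcher [sg] of a rule
   agree on ℓ⃗ and b⃗, hence the recorded condition facts transfer to [sg]. *)
Lemma consistent_HAux_inv f i j rho sg X d :
  1 <= i <= m f -> nth_error (Rf f) (i-1) = Some rho -> 1 <= j <= length (rconds rho) ->
  length X = m f ->
  consistent (Fun (HAux f i j) (args_inst sg (rargs rho) ++
                ins X i (cond_rhs_inst rho sg (j-1) ++ [d]))) ->
  (exists X', length X' = m f /\ Forall is_bt X' /\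
     firstn (i-1) X' = firstn (i-1) X /\ skipn i X' = skipn i X) /\
  (forall j', j' < j-1 -> lsteps (subst (zeta_ext_subst sg) (label (cnd_a rho j')))
                                 (subst (zeta_ext_subst sg) (label (cnd_b rho j')))) /\
  lsteps (subst (zeta_ext_subst sg) (label (cnd_a rho (j-1)))) (zeta_ext d).
Proof.
  intros Hi Hn Hj HX H.
  inversion H as [| | | |f0 i0 j0 rho0 sg0 X0 c0 Hi0 Hn0 Hj0 HX0 Hbt0 HInv0 Hc0 Hl0];
    subst.
  match goal with E : _ ++ _ = _ ++ _ |- _ => rename E into Hts0 end.
  rewrite Hn in Hn0. injection Hn0 as <-.
  apply app_inj_length in Hts0 as [E1 E2]; [| rewrite !length_args_inst; auto].
  apply ins_inj in E2 as [F1 [F2 F3]];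
    try (rewrite ?length_map; lia);
    try (rewrite !length_app, !length_cond_rhs_inst by lia; reflexivity).
  apply app_inj_tail in F2 as [G1 <-].
  assert (Hr := nth_error_In _ _ Hn).
  assert (A1 := args_inst_eq_vars _ _ _ E1). assert (A2 := cond_rhs_inst_eq_vars _ _ _ _ G1).
  split; [|split].
  - exists X0. repeat split; auto.
  - intros j' Hj'. specialize (Hc0 j' Hj').
    rewrite (label_cnd_a_agree f rho sg0 sg j' (j-1)),
            (label_cnd_b_agree rho sg0 sg j' (j-1)) in Hc0; auto; try lia;
      intros x Hx; symmetry; auto.
  - rewrite (label_cnd_a_agree f rho sg0 sg (j-1) (j-1)) in Hl0; auto; try lia;
      intros x Hx; symmetry; auto.
Qed.

(** * Simulating a root step *)

Section RuleStep.
Variables (f : F) (i : nat) (rho : crule F) (X : list hterm) (sg : nat -> hterm).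
Hypothesis Hi : 1 <= i <= m f.
Hypothesis Hn : nth_error (Rf f) (i-1) = Some rho.
Hypothesis HX : length X = m f.

Let Hrho : In rho (Rf f) := nth_error_In _ _ Hn.
Let A := args_inst sg (rargs rho).

Lemma length_A : length A = arity f.
Proof. unfold A. rewrite length_args_inst. exact (length_rargs f rho Hrho). Qed.

Lemma zeta_ext_A : map zeta_ext A = map (fun l => subst (zeta_ext_subst sg) (label l)) (rargs rho).
Proof. apply zeta_ext_args_inst; [apply (cterm_rargs f)|apply (wf_rargs f)]; exact Hrho. Qed.

Lemma lstep_apply :
  (forall j, j < length (rconds rho) ->
     lsteps (subst (zeta_ext_subst sg) (label (cnd_a rho j)))
            (subst (zeta_ext_subst sg) (label (cnd_b rho j)))) ->
  lstep (Fun (f, map is_top (ins X i [top])) (map zeta_ext A))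
        (zeta_ext (subst sg (xi HTop (rrhs rho)))).
Proof.
  intros Hconds. rewrite zeta_ext_xi, zeta_ext_A by (exact (wf_rrhs f rho Hrho)).
  apply (ls_apply F Rf f _ (i-1) rho (zeta_ext_subst sg)); auto.
  apply nth_is_top_ins_top. lia.
Qed.

Lemma consistent_cnd_a j : j < length (rconds rho) ->
  Forall consistent A -> Forall consistent (cond_rhs_inst rho sg j) ->
  consistent (subst sg (xi HTop (cnd_a rho j))).
Proof.
  intros Hj HA HB. apply consistent_xi; [apply (wf_cnd_a f); auto|].
  intros x Hx. apply (vars_cnd_a f rho Hrho j Hj) in Hx. apply in_app_or in Hx as [Hx|Hx].
  - eapply consistent_args_inst_var; eauto.
  - eapply consistent_cond_rhs_inst_var; eauto.
Qed.

Lemma consistent_rrhs : Forall consistent A ->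
  Forall consistent (cond_rhs_inst rho sg (length (rconds rho))) ->
  consistent (subst sg (xi HTop (rrhs rho))).
Proof.
  intros HA HB. apply consistent_xi; [exact (wf_rrhs f rho Hrho)|].
  intros x Hx. apply (vars_rrhs f rho Hrho) in Hx. apply in_app_or in Hx as [Hx|Hx].
  - eapply consistent_args_inst_var; eauto.
  - eapply consistent_cond_rhs_inst_var; [exact HB|]. rewrite firstn_all. exact Hx.
Qed.

Lemma Forall_consistent_ins M : Forall is_bt (ins X i [top]) -> Forall consistent M ->
  Forall consistent (ins X i M).
Proof.
  intros H1 H2. apply Forall_ins_inv in H1 as [H1 [_ H3]].
  apply (Forall_ins _ X X); auto; apply Forall_is_bt_consistent; auto.
Qed.

(* Rule (1) is simulated by case (ii) of ⇀ with no conditions. *)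
Lemma sim_rule_apply : length (rconds rho) = 0 ->
  consistent (Fun (HF f) (A ++ ins X i [top])) ->
  consistent (subst sg (xi HTop (rrhs rho))) /\
  lstep (zeta_ext (Fun (HF f) (A ++ ins X i [top]))) (zeta_ext (subst sg (xi HTop (rrhs rho)))).
Proof.
  intros Hk H. apply consistent_HF_app_inv in H as [HA _]; [|apply length_A].
  split.
  - apply consistent_rrhs; auto. rewrite Hk. constructor.
  - rewrite zeta_ext_HF by apply length_A. apply lstep_apply. lia.
Qed.

(* Rule (2) is silent: f_i^1 still reads as f_R with ρ_i ∈ R. *)
Lemma sim_rule_enter : 0 < length (rconds rho) ->
  consistent (Fun (HF f) (A ++ ins X i [top])) ->
  consistent (Fun (HAux f i 1) (A ++ ins X i [subst sg (xi HTop (cnd_a rho 0))])) /\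
  zeta_ext (Fun (HF f) (A ++ ins X i [top])) =
  zeta_ext (Fun (HAux f i 1) (A ++ ins X i [subst sg (xi HTop (cnd_a rho 0))])).
Proof.
  intros Hk H. apply consistent_HF_app_inv in H as [HA [Hbt _]]; [|apply length_A].
  assert (Hc1 : consistent (subst sg (xi HTop (cnd_a rho 0))))
    by (apply consistent_cnd_a; auto; constructor).
  split.
  - replace (ins X i [subst sg (xi HTop (cnd_a rho 0))])
      with (ins (ins X i [top]) i (cond_rhs_inst rho sg (1-1) ++ [subst sg (xi HTop (cnd_a rho 0))]))
      by (rewrite ins_ins by lia; reflexivity).
    apply (consistent_HAux f i 1 rho sg (ins X i [top]) _ Hi Hn ltac:(lia));
      rewrite ?length_ins by lia; simpl; auto.
    + lia.
    + rewrite ins_ins by lia. apply Forall_app; split; auto. apply Forall_consistent_ins; auto.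
    + intros; lia.
    + rewrite zeta_ext_xi by (apply (wf_cnd_a f); auto). constructor.
  - rewrite zeta_ext_HF by apply length_A.
    symmetry. apply (zeta_ext_HAux f i 1 A X []); [apply length_A|simpl; lia..].
Qed.

(* Rule (3) is simulated by case (ii) with j = k; the last condition is witnessed by the slot. *)
Lemma sim_rule_finish : 0 < length (rconds rho) ->
  consistent (Fun (HAux f i (length (rconds rho)))
                  (A ++ ins X i (cond_rhs_inst rho sg (length (rconds rho))))) ->
  consistent (subst sg (xi HTop (rrhs rho))) /\
  lstep (zeta_ext (Fun (HAux f i (length (rconds rho)))
                      (A ++ ins X i (cond_rhs_inst rho sg (length (rconds rho))))))
        (zeta_ext (subst sg (xi HTop (rrhs rho)))).
Proof.
  intros Hk H. set (k := length (rconds rho)) in *.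
  assert (EB : cond_rhs_inst rho sg k =
               cond_rhs_inst rho sg (k-1) ++ [subst sg (emb (cnd_b rho (k-1)))]).
  { replace k with (S (k-1)) at 1 by lia. apply cond_rhs_inst_S. lia. }
  destruct (consistent_HAux_args _ _ _ _ _ _ H) as [HA HB].
  rewrite EB in H.
  destruct (consistent_HAux_inv f i k rho sg X _ Hi Hn ltac:(lia) HX H)
    as [_ [Hconds Hslot]].
  rewrite zeta_ext_emb in Hslot by (apply (cterm_cnd_b f) || apply (wf_cnd_b f); auto; lia).
  split.
  - apply consistent_rrhs; auto.
  - rewrite EB, zeta_ext_HAux by (rewrite ?length_cond_rhs_inst; auto; apply length_A || lia).
    apply lstep_apply. intros j Hj. destruct (Nat.ltb_spec j (k-1)).
    + apply Hconds. auto.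
    + replace j with (k-1) by lia. exact Hslot.
Qed.

(* Rule (4) is silent; the slot, now b_jσ, witnesses the j-th condition. *)
Lemma sim_rule_next j : 1 <= j < length (rconds rho) ->
  consistent (Fun (HAux f i j) (A ++ ins X i (cond_rhs_inst rho sg j))) ->
  consistent (Fun (HAux f i (S j))
    (A ++ ins X i (cond_rhs_inst rho sg j ++ [subst sg (xi HTop (cnd_a rho j))]))) /\
  zeta_ext (Fun (HAux f i j) (A ++ ins X i (cond_rhs_inst rho sg j))) =
  zeta_ext (Fun (HAux f i (S j))
    (A ++ ins X i (cond_rhs_inst rho sg j ++ [subst sg (xi HTop (cnd_a rho j))]))).
Proof.
  intros Hj H.
  assert (EB : cond_rhs_inst rho sg j =
               cond_rhs_inst rho sg (j-1) ++ [subst sg (emb (cnd_b rho (j-1)))]).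
  { replace j with (S (j-1)) at 1 by lia. apply cond_rhs_inst_S. lia. }
  destruct (consistent_HAux_args _ _ _ _ _ _ H) as [HA HB].
  rewrite EB in H.
  destruct (consistent_HAux_inv f i j rho sg X _ Hi Hn ltac:(lia) HX H)
    as [[X' [HX' [Hbt [E1 E2]]]] [Hconds Hslot]].
  rewrite zeta_ext_emb in Hslot by (apply (cterm_cnd_b f) || apply (wf_cnd_b f); auto; lia).
  assert (HX2 := consistent_args _ _ H). apply Forall_app in HX2 as [_ HX2].
  apply Forall_ins_inv in HX2 as [HX1 [_ HX2]].
  split.
  - rewrite (ins_congr X X') by auto.
    replace (cond_rhs_inst rho sg j) with (cond_rhs_inst rho sg (S j - 1)) by (f_equal; lia).
    apply (consistent_HAux f i (S j) rho sg X' _ Hi Hn ltac:(lia) HX' Hbt);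
      replace (S j - 1) with j by lia.
    + apply Forall_app; split; auto.
      apply (Forall_ins _ _ X); auto. apply Forall_app; split; auto.
      repeat constructor. apply consistent_cnd_a; auto. lia.
    + intros j' Hj'. destruct (Nat.ltb_spec j' (j-1)).
      * apply Hconds. auto.
      * replace j' with (j-1) by lia. exact Hslot.
    + rewrite zeta_ext_xi by (apply (wf_cnd_a f); auto; lia). constructor.
  - rewrite EB, !zeta_ext_HAux
      by (rewrite ?length_app, ?length_cond_rhs_inst; simpl; auto; apply length_A || lia).
    reflexivity.
Qed.

(* Rule (5) is simulated by case (ii) with a failing condition. *)
Lemma sim_rule_condfail j v : 1 <= j <= length (rconds rho) -> AP (cnd_b rho (j-1)) v ->
  consistent (Fun (HAux f i j) (A ++ ins X i (cond_rhs_inst rho sg (j-1) ++ [subst sg v]))) ->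
  consistent (Fun (HF f) (A ++ ins X i [bot])) /\
  lstep (zeta_ext (Fun (HAux f i j) (A ++ ins X i (cond_rhs_inst rho sg (j-1) ++ [subst sg v]))))
        (zeta_ext (Fun (HF f) (A ++ ins X i [bot]))).
Proof.
  intros Hj HAP H.
  destruct (consistent_HAux_inv f i j rho sg X _ Hi Hn Hj HX H)
    as [[X' [HX' [Hbt [E1 E2]]]] [Hconds Hslot]].
  destruct (consistent_HAux_args _ _ _ _ _ _ H) as [HA _].
  assert (Hwb : wf (cnd_b rho (j-1))) by (apply (wf_cnd_b f); auto; lia).
  assert (Hcb : cterm (cnd_b rho (j-1))) by (apply (cterm_cnd_b f); auto; lia).
  split.
  - apply consistent_HF; auto.
    + apply length_A.
    + rewrite length_ins; simpl; lia.
    + apply (Forall_ins _ _ X'); auto using Forall_firstn, Forall_skipn.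
      repeat constructor.
  - rewrite zeta_ext_HAux by (rewrite ?length_cond_rhs_inst; auto; apply length_A || lia).
    rewrite zeta_ext_HF, <- clear_at_is_top_ins_top, zeta_ext_A by (apply length_A || lia).
    destruct (AP_lnf_witness _ _ HAP Hwb Hcb sg (S (list_max (vars (cnd_b rho (j-1))))))
      as [u [tau [Hlu [Hndu [Hgeu [Hsu Hnu]]]]]].
    apply (ls_condfail F Rf f _ (i-1) rho (zeta_ext_subst sg) (j-1) u tau); auto.
    + apply nth_is_top_ins_top. lia.
    + lia.
    + intros x Hx Hx'. apply Hgeu in Hx. apply le_list_max in Hx'. lia.
    + rewrite Hsu. exact Hslot.
Qed.

(* Rule (6) is simulated by case (i). *)
Lemma sim_rule_nomatch (Y : list hterm) j v :
  length Y = arity f -> 1 <= j <= arity f -> AP (nth (j-1) (rargs rho) (Var 0)) v ->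
  consistent (Fun (HF f) (ins Y j [subst sg v] ++ ins X i [top])) ->
  consistent (Fun (HF f) (ins Y j [subst sg v] ++ ins X i [bot])) /\
  lstep (zeta_ext (Fun (HF f) (ins Y j [subst sg v] ++ ins X i [top])))
        (zeta_ext (Fun (HF f) (ins Y j [subst sg v] ++ ins X i [bot]))).
Proof.
  intros HY Hj HAP H.
  set (ss := ins Y j [subst sg v]) in *.
  assert (Hss : length ss = arity f) by (unfold ss; rewrite length_ins; simpl; lia).
  apply consistent_HF_app_inv in H as [HL [Hbt _]]; auto.
  apply Forall_ins_inv in Hbt as [Hb1 [_ Hb3]].
  split.
  - apply consistent_HF; auto.
    + rewrite length_ins; simpl; lia.
    + apply (Forall_ins _ _ X); auto. repeat constructor.
  - rewrite !zeta_ext_HF, <- clear_at_is_top_ins_top by (auto || lia).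
    set (N0 := S (list_max (flat_map vars (rargs rho)))).
    set (zs := map zeta_ext Y).
    assert (Hzs : length zs = arity f) by (unfold zs; rewrite length_map; auto).
    destruct (AP_lnf_witness _ _ HAP (wf_rarg f rho Hrho (j-1) ltac:(lia))
                (cterm_rarg f rho Hrho (j-1) ltac:(lia)) sg (N0 + length zs))
      as [u [tau [Hlu [Hndu [Hgeu [Hsu Hnu]]]]]].
    destruct (vars_ins_seq u N0 (length zs) j Hndu Hgeu ltac:(lia)) as [Hnd Hge].
    apply (ls_nomatch F Rf f _ (i-1) rho (map zeta_ext ss)
             (ins (map Var (seq N0 (length zs))) j [u]) (seq_subst N0 zs tau)); auto.
    + apply nth_is_top_ins_top. lia.
    + apply Forall_lnf_ins_Var; auto.
    + intros x Hx Hx'. apply Hge in Hx. apply le_list_max in Hx'. unfold N0 in Hx.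
      change (vars (rlhs f rho)) with (flat_map vars (rargs rho)) in Hx'. lia.
    + rewrite map_seq_subst_ins by auto. unfold ss. rewrite map_ins, Hsu. reflexivity.
    + apply not_unifiable_ins_Var; [rewrite length_seq; lia|]. exact Hnu.
Qed.

End RuleStep.

Definition dummy_rule : crule F := mkRule F [] (Var 0) [].

Definition pending_conds (t : hterm) : nat :=
  match t with
  | Fun (HAux f i j) _ => length (rconds (nth (i-1) (Rf f) dummy_rule)) - j
  | _ => 0
  end.

Definition is_aux (t : hterm) : Prop := exists f i j ts, t = Fun (HAux f i j) ts.

(* What rules (2) and (4) guarantee about their silent root steps. *)
Definition silent_root (t t' : hterm) : Prop :=
  is_aux t' /\ (is_aux t -> pending_conds t' < pending_conds t).

Lemma subst_rule_lhs sg g ls xv i mid :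
  subst sg (Fun g (map emb ls ++ ins (map Var xv) i mid)) =
  Fun g (args_inst sg ls ++ ins (map sg xv) i (map (subst sg) mid)).
Proof. cbn [subst]. rewrite map_app, map_ins, !map_map. reflexivity. Qed.

Lemma map_subst_cond_rhs sg rho n :
  map (subst sg) (map (fun c => emb (snd c)) (firstn n (rconds rho))) = cond_rhs_inst rho sg n.
Proof. apply map_map. Qed.

Lemma sim_root l r sg : Xi_rule l r -> consistent (subst sg l) ->
  consistent (subst sg r) /\
  (lstep (zeta_ext (subst sg l)) (zeta_ext (subst sg r)) \/
   zeta_ext (subst sg l) = zeta_ext (subst sg r) /\ silent_root (subst sg l) (subst sg r)).
Proof.
  intros [_ [f [i [rho [xv [Hi [Hn [Hxv Hc]]]]]]]] H. cbv beta zeta in Hc.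
  assert (HX : length (map sg xv) = m f) by (rewrite length_map; auto).
  destruct Hc as [[Hk [-> ->]] | [[Hk [-> ->]] | [[Hk [-> ->]] | [[j [Hj [-> ->]]] |
    [[j [v [Hj [HAP [-> ->]]]]] | [yv [j [v [Hyv [Hj [HAP [-> ->]]]]]]]]]]]];
    rewrite ?subst_rule_lhs, ?map_app, ?map_subst_cond_rhs in *.
  - destruct (sim_rule_apply f i rho _ sg Hi Hn HX Hk H) as [H1 H2].
    split; [exact H1|left; exact H2].
  - destruct (sim_rule_enter f i rho _ sg Hi Hn HX ltac:(lia) H) as [H1 H2].
    split; [exact H1|right; split; [exact H2|split]].
    + do 4 eexists. reflexivity.
    + intros (?&?&?&?&E). discriminate.
  - destruct (sim_rule_finish f i rho _ sg Hi Hn HX Hk H) as [H1 H2].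
    split; [exact H1|left; exact H2].
  - replace (S j - 1) with j by lia.
    destruct (sim_rule_next f i rho _ sg Hi Hn HX j Hj H) as [H1 H2].
    split; [exact H1|right; split; [exact H2|split]].
    + do 4 eexists. reflexivity.
    + intros _. simpl. rewrite (nth_error_nth _ _ _ Hn). lia.
  - destruct (sim_rule_condfail f i rho _ sg Hi Hn HX j v Hj HAP H) as [H1 H2].
    split; [exact H1|left; exact H2].
  - cbn [subst] in *. rewrite !map_app, !map_ins, !map_map in *.
    assert (HY : length (map sg yv) = arity f) by (rewrite length_map; auto).
    destruct (sim_rule_nomatch f i rho _ sg Hi Hn HX _ j v HY Hj HAP H) as [H1 H2].
    split; [exact H1|left; exact H2].
Qed.

Lemma zeta_ext_HF_arg f pre post : length pre < arity f ->
  exists lab post', forall t,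
    zeta_ext (Fun (HF f) (pre ++ t :: post)) = Fun (f, lab) (map zeta_ext pre ++ zeta_ext t :: post').
Proof.
  intros Hl. exists (map is_top (skipn (arity f - length pre - 1) post)),
    (firstn (arity f - length pre - 1) (map zeta_ext post)).
  intros t. set (n := arity f - length pre - 1). simpl.
  replace (arity f) with (length pre + S n) by (unfold n; lia).
  rewrite skipn_app, skipn_all2, (map_app zeta_ext), firstn_app, firstn_all2 by (rewrite ?length_map; lia).
  rewrite length_map. replace (length pre + S n - length pre) with (S n) by lia. reflexivity.
Qed.

Lemma lstep_HF_arg f pre s t post : length pre < arity f ->
  lstep (zeta_ext s) (zeta_ext t) ->
  lstep (zeta_ext (Fun (HF f) (pre ++ s :: post))) (zeta_ext (Fun (HF f) (pre ++ t :: post))).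
Proof.
  intros Hl Hst. destruct (zeta_ext_HF_arg f pre post Hl) as [lab [post' E]].
  rewrite !E. apply ls_ctx, Hst.
Qed.

Lemma zeta_ext_HF_arg_eq f pre s t post : length pre < arity f ->
  zeta_ext s = zeta_ext t ->
  zeta_ext (Fun (HF f) (pre ++ s :: post)) = zeta_ext (Fun (HF f) (pre ++ t :: post)).
Proof.
  intros Hl Hst. destruct (zeta_ext_HF_arg f pre post Hl) as [lab [post' E]].
  rewrite !E, Hst. reflexivity.
Qed.

Lemma consistent_HF_arg f pre s post : length pre < arity f ->
  consistent (Fun (HF f) (pre ++ s :: post)) ->
  consistent s /\ forall t, consistent t -> consistent (Fun (HF f) (pre ++ t :: post)).
Proof.
  intros Hl H. apply consistent_HF_inv in H as [ss [cs [E [Hss [HIs [Hcl Hbt]]]]]].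
  destruct (app_cons_prefix pre post ss cs s ltac:(nlia) E) as [post1 [-> ->]].
  apply Forall_app in HIs as [HIp HIs]. inversion HIs; subst.
  split; auto. intros t Ht. rewrite app_comm_cons, app_assoc.
  apply consistent_HF; auto.
  - rewrite length_app in *; simpl in *; nlia.
  - apply Forall_app; split; auto.
Qed.

Definition slot (t : hterm) : hterm :=
  match t with
  | Fun (HAux f i j) ts => nth (arity f + i + j - 2) ts (Var 0)
  | _ => Var 0
  end.

Lemma slot_HAux f i j pre c post :
  length pre = arity f + i + j - 2 -> slot (Fun (HAux f i j) (pre ++ c :: post)) = c.
Proof.
  intros H. simpl. rewrite app_nth2 by nlia.
  replace (arity f + i + j - 2 - length pre) with 0 by nlia. reflexivity.
Qed.

Lemma app_ins_snoc {A} (L X B : list A) i c :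
  L ++ ins X i (B ++ [c]) = (L ++ firstn (i-1) X ++ B) ++ c :: skipn i X.
Proof. unfold ins. rewrite <- !app_assoc. reflexivity. Qed.

Lemma length_HAux_prefix f i j rho sg (X : list hterm) :
  In rho (Rf f) -> 1 <= i <= length X -> 1 <= j <= length (rconds rho) ->
  length (args_inst sg (rargs rho) ++ firstn (i-1) X ++ cond_rhs_inst rho sg (j-1)) =
  arity f + i + j - 2.
Proof.
  intros Hr Hi Hj.
  rewrite !length_app, length_args_inst, length_firstn, length_cond_rhs_inst by lia.
  rewrite (length_rargs f rho Hr). lia.
Qed.

Lemma lsteps_snoc a b c : lsteps a b -> lstep b c -> lsteps a c.
Proof.
  induction 1 as [s|s t u H1 H2 IH]; intros Hc.
  - econstructor; [exact Hc| constructor].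
  - econstructor; [exact H1| auto].
Qed.

Lemma consistent_HAux_slot f i j pre c post :
  length pre = arity f + i + j - 2 ->
  consistent (Fun (HAux f i j) (pre ++ c :: post)) ->
  consistent c /\
  forall c', consistent c' -> (lstep (zeta_ext c) (zeta_ext c') \/ zeta_ext c = zeta_ext c') ->
    consistent (Fun (HAux f i j) (pre ++ c' :: post)) /\
    zeta_ext (Fun (HAux f i j) (pre ++ c :: post)) = zeta_ext (Fun (HAux f i j) (pre ++ c' :: post)).
Proof.
  intros Hl H.
  inversion H as [| | | |f0 i0 j0 rho sg X c0 Hi Hn Hj HX Hbt HInv Hc Hl0 E]; subst.
  match goal with E : _ ++ _ = _ ++ _ |- _ => rename E into Hts end.
  assert (Hr := nth_error_In _ _ Hn).
  rewrite app_ins_snoc in Hts, HInv.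
  apply app_cons_inj_length in Hts as [E1 [E2 E3]];
    [subst pre c0 post|rewrite (length_HAux_prefix f) by (auto; nlia); nlia].
  apply Forall_app in HInv as [HIa HIb]. inversion HIb as [|? ? HIc HId]; subst.
  split; auto. intros c' Hc' Hz. rewrite <- !app_ins_snoc.
  split.
  - apply (consistent_HAux f i j rho sg X c'); auto.
    + rewrite app_ins_snoc. apply Forall_app. split; auto.
    + destruct Hz as [Hz|Hz]; [eapply lsteps_snoc; eauto|rewrite <- Hz; auto].
  - rewrite !zeta_ext_HAux
      by (rewrite ?length_args_inst, ?length_cond_rhs_inst, ?(length_rargs f rho Hr); nlia).
    reflexivity.
Qed.

Lemma sim_cstep t t' : cstep t t' -> consistent t ->
  consistent t' /\ (lstep (zeta_ext t) (zeta_ext t') \/ zeta_ext t = zeta_ext t').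
Proof.
  induction 1 as [l r sg Hr | g pre s t0 post Hact Hst IH]; intros H.
  - destruct (sim_root l r sg Hr H) as [H1 [H2|[H2 _]]]; auto.
  - destruct g as [| |f|f i j]; simpl in Hact; try contradiction.
    + destruct (consistent_HF_arg f pre s post Hact H) as [Hs Hrepl].
      destruct (IH Hs) as [Ht0 [Hz|Hz]]; split; auto.
      * left. apply lstep_HF_arg; auto.
      * right. apply zeta_ext_HF_arg_eq; auto.
    + destruct (consistent_HAux_slot f i j pre s post Hact H) as [Hs Hrepl].
      destruct (IH Hs) as [Ht0 Hz]. destruct (Hrepl t0 Ht0 Hz). auto.
Qed.

(** * Diverging conditions and well-founded silent steps *)

(* A ⇀_▷-step from [g] enters the (j+1)-th condition of a rule instance, and that condition
   reduces by ⇀* to the image of a consistent non-terminating term. *)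
Definition diverging_condition (g : gterm) : Prop :=
  exists f lab i rho (sg : nat -> gterm) j c,
    nth_error (Rf f) i = Some rho /\ nth i lab false = true /\ j < length (rconds rho) /\
    (forall j', j' < j ->
       lsteps (subst sg (label (cnd_a rho j'))) (subst sg (label (cnd_b rho j')))) /\
    subterm_eq (Fun (f, lab) (map (fun l => subst sg (label l)) (rargs rho))) g /\
    consistent c /\ nonterminating c /\ lsteps (subst sg (label (cnd_a rho j))) (zeta_ext c).

Lemma diverging_condition_subterm g h :
  diverging_condition g -> subterm_eq g h -> diverging_condition h.
Proof.
  intros (f&lab&i&rho&sg&j&c&H1&H2&H3&H4&H5&H6&H7&H8) Hs.
  exists f, lab, i, rho, sg, j, c. repeat split; auto. eapply subterm_eq_trans; eauto.
Qed.

Lemma consistent_HAux_split f i j ts : consistent (Fun (HAux f i j) ts) ->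
  exists pre c post, ts = pre ++ c :: post /\ length pre = arity f + i + j - 2.
Proof.
  intros H. inversion H as [| | | |f0 i0 j0 rho sg X c Hi Hn Hj HX]; subst.
  exists (args_inst sg (rargs rho) ++ firstn (i-1) X ++ cond_rhs_inst rho sg (j-1)), c, (skipn i X).
  split; [apply app_ins_snoc|]. apply length_HAux_prefix; auto.
  - apply (nth_error_In _ _ Hn).
  - nlia.
Qed.

Lemma consistent_HAux_diverging f i j pre c post :
  length pre = arity f + i + j - 2 ->
  consistent (Fun (HAux f i j) (pre ++ c :: post)) -> nonterminating c ->
  diverging_condition (zeta_ext (Fun (HAux f i j) (pre ++ c :: post))).
Proof.
  intros Hl H Hnt. destruct (consistent_HAux_slot f i j pre c post Hl H) as [Hc _].
  inversion H as [| | | |f0 i0 j0 rho sg X c0 Hi Hn Hj HX Hbt HInv Hconds Hslot]; subst.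
  match goal with E : _ = pre ++ c :: post |- _ => rename E into Hts end.
  assert (Hr := nth_error_In _ _ Hn).
  assert (Ec : c0 = c).
  { rewrite app_ins_snoc in Hts. apply app_cons_inj_length in Hts; [tauto|].
    rewrite (length_HAux_prefix f) by (auto; nlia). nlia. }
  subst c0.
  rewrite zeta_ext_HAux, (zeta_ext_args_inst sg)
    by (try apply (cterm_rargs f); try apply (wf_rargs f);
        rewrite ?length_args_inst, ?length_cond_rhs_inst, ?(length_rargs f rho Hr); auto; nlia).
  exists f, (map is_top (ins X i [top])), (i-1), rho, (zeta_ext_subst sg), (j-1), c.
  repeat split; auto.
  - apply nth_is_top_ins_top. nlia.
  - nlia.
  - constructor.
Qed.

Lemma cstep_head t t' : cstep t t' -> exists g ts, t = Fun g ts /\ g <> HBot /\ g <> HTop.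
Proof.
  intros [l r sg Hr | g pre s u post Hact _].
  - destruct Hr as [_ [f [i [rho [xv [_ [_ [_ Hc]]]]]]]]. cbv beta zeta in Hc.
    destruct Hc as [[_ [-> _]] | [[_ [-> _]] | [[_ [-> _]] | [[j [_ [-> _]]] |
      [[j [v [_ [_ [-> _]]]]] | [yv [j [v [_ [_ [_ [-> _]]]]]]]]]]]];
      (do 2 eexists; split; [reflexivity|split; discriminate]).
  - exists g, (pre ++ s :: post). split; [reflexivity|].
    destruct g; simpl in Hact; try contradiction; split; discriminate.
Qed.

Local Notation terminating := (Acc (fun b a => cstep a b)).

Definition silent (t t' : hterm) : Prop := cstep t t' /\ ~ lstep (zeta_ext t) (zeta_ext t').

Local Notation silently_terminating := (Acc (fun b a => silent a b)).

Lemma terminating_of_not_nonterminating t : ~ nonterminating t -> terminating t.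
Proof.
  intros H. apply NNPP. intros Hn. apply H. apply not_Acc_seq. exact Hn.
Qed.

Lemma terminating_slot t : consistent t -> is_aux t -> ~ diverging_condition (zeta_ext t) ->
  terminating (slot t).
Proof.
  intros H [f [i [j [ts ->]]]] HG.
  destruct (consistent_HAux_split f i j ts H) as [pre [c [post [-> Hl]]]].
  rewrite slot_HAux by auto. apply terminating_of_not_nonterminating.
  intros Hnt. apply HG. apply consistent_HAux_diverging; auto.
Qed.

Lemma silent_inv t t' : silent t t' -> consistent t ->
  consistent t' /\ zeta_ext t = zeta_ext t'.
Proof.
  intros [Hst Hnl] H. destruct (sim_cstep _ _ Hst H) as [H' [Hz|Hz]]; [contradiction|auto].
Qed.

(* Lexicographic induction: silent root steps decrease the pending conditions, all other
   silent steps reduce inside the slot. *)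
Lemma silently_terminating_HAux_gen : forall n c, terminating c ->
  forall t, pending_conds t = n -> slot t = c -> consistent t ->
  ~ diverging_condition (zeta_ext t) -> is_aux t -> silently_terminating t.
Proof.
  intros n. induction n as [n IHn] using lt_wf_ind.
  intros c Hc. induction Hc as [c _ IHc].
  intros t Hm Hs HI HG Ha. constructor. intros t' Hsil.
  destruct (silent_inv _ _ Hsil HI) as [HI' Hz].
  assert (HG' : ~ diverging_condition (zeta_ext t')) by (rewrite <- Hz; auto).
  destruct Hsil as [Hst Hnl].
  inversion Hst as [l r sg Hr E1 E2|g pre s s' post Hact Hs' E1 E2]; subst.
  - destruct (sim_root l r sg Hr HI) as [_ [Hl|[_ [Ha' Hlt]]]]; [contradiction|].
    apply (IHn (pending_conds (subst sg r)) (Hlt Ha) (slot (subst sg r))); auto.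
    apply terminating_slot; auto.
  - destruct Ha as [f [i [j [ts Ha]]]]. injection Ha as -> Ets. simpl in Hact.
    rewrite slot_HAux in * by auto.
    apply (IHc s'); auto.
    + rewrite slot_HAux by auto. reflexivity.
    + do 4 eexists; reflexivity.
Qed.

Lemma silently_terminating_HAux t : consistent t -> is_aux t ->
  ~ diverging_condition (zeta_ext t) -> silently_terminating t.
Proof.
  intros. eapply silently_terminating_HAux_gen; eauto using terminating_slot.
Qed.

Lemma silently_terminating_HF f ss : Acc (fun y x => list_step silent x y) ss ->
  forall cs, length ss = arity f -> consistent (Fun (HF f) (ss ++ cs)) ->
  ~ diverging_condition (zeta_ext (Fun (HF f) (ss ++ cs))) ->
  silently_terminating (Fun (HF f) (ss ++ cs)).
Proof.
  induction 1 as [ss _ IH]. intros cs Hl HI HG. constructor. intros t' Hsil.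
  destruct (silent_inv _ _ Hsil HI) as [HI' Hz].
  assert (HG' : ~ diverging_condition (zeta_ext t')) by (rewrite <- Hz; auto).
  destruct Hsil as [Hst Hnl].
  inversion Hst as [l r sg Hr E1 E2|g pre s s' post Hact Hs' E1 E2].
  - subst t'. rewrite <- E1 in HI, Hnl.
    destruct (sim_root l r sg Hr HI) as [_ [Hl'|[_ [Ha' _]]]]; [contradiction|].
    apply silently_terminating_HAux; auto.
  - subst g t'. simpl in Hact.
    match goal with E : pre ++ s :: post = ss ++ cs |- _ => rename E into Es end.
    destruct (app_cons_prefix pre post ss cs s ltac:(nlia) Es) as [post1 [-> ->]].
    rewrite app_comm_cons, app_assoc in *.
    apply IH; auto.
    + constructor. split; auto. intros Hl'. apply Hnl.
      rewrite <- !app_assoc, <- !app_comm_cons. apply lstep_HF_arg; auto.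
    + rewrite length_app in *; simpl in *; nlia.
Qed.

Lemma silently_terminating_of_not_diverging t : consistent t ->
  ~ diverging_condition (zeta_ext t) -> silently_terminating t.
Proof.
  induction t as [x|g ts IH] using term_ind'; intros HI HG;
    [|destruct g as [| |f|f i j]];
    try (constructor; intros t' [H _]; apply cstep_head in H as (g&ts'&E&Hb&Ht);
         first [discriminate | injection E as <- _; contradiction]).
  - apply consistent_HF_inv in HI as HI'. destruct HI' as [ss [cs [-> [Hl [HIs _]]]]].
    apply silently_terminating_HF; auto. apply Acc_list_step.
    rewrite Forall_forall in IH, HIs |- *. intros s Hs. apply IH; auto.
    + apply in_or_app; auto.
    + intros HGs. apply HG. apply (diverging_condition_subterm _ _ HGs).
      rewrite zeta_ext_HF by auto. econstructor; [apply in_map; exact Hs| constructor].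
  - apply silently_terminating_HAux; auto. do 4 eexists; reflexivity.
Qed.

Definition gstep (g g' : gterm) : Prop := lstep g g' \/ lcstep g g'.

Local Notation gsteps := (clos_refl_trans_1n gterm gstep).

Lemma gsteps_of_lsteps a b : lsteps a b -> gsteps a b.
Proof.
  induction 1 as [s|s t u H1 H2 IH]; [constructor|]. econstructor; [left; exact H1| exact IH].
Qed.

Lemma progress_silently_terminating t : silently_terminating t -> consistent t ->
  forall sq : nat -> hterm, sq 0 = t -> (forall k, cstep (sq k) (sq (S k))) ->
  exists t', consistent t' /\ nonterminating t' /\
    exists g, gstep (zeta_ext t) g /\ gsteps g (zeta_ext t').
Proof.
  induction 1 as [t _ IH]. intros HI sq E Hsq.
  assert (Hst : cstep t (sq 1)) by (rewrite <- E; apply Hsq).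
  destruct (sim_cstep _ _ Hst HI) as [HI1 Hz].
  destruct (classic (lstep (zeta_ext t) (zeta_ext (sq 1)))) as [Hl|Hnl].
  - exists (sq 1). split; [|split].
    + exact HI1.
    + exists (fun k => sq (S k)). auto.
    + exists (zeta_ext (sq 1)). split; [left; auto| constructor].
  - destruct Hz as [Hz|Hz]; [contradiction|].
    destruct (IH (sq 1) (conj Hst Hnl) HI1 (fun k => sq (S k)) eq_refl (fun k => Hsq (S k)))
      as [t' [H1 [H2 H3]]].
    exists t'. rewrite Hz. auto.
Qed.

Lemma progress t : consistent t -> nonterminating t ->
  exists t', consistent t' /\ nonterminating t' /\
    exists g, gstep (zeta_ext t) g /\ gsteps g (zeta_ext t').
Proof.
  intros HI HN. destruct (classic (diverging_condition (zeta_ext t))) as [HG|HG].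
  - destruct HG as (f&lab&i&rho&sg&j&c&H1&H2&H3&H4&H5&H6&H7&H8).
    exists c. split; [|split]; auto. exists (subst sg (label (cnd_a rho j))). split.
    + right. exists f, lab, i, rho, sg, j. repeat split; auto.
    + apply gsteps_of_lsteps. auto.
  - destruct HN as [sq [E Hsq]].
    exact (progress_silently_terminating t
             (silently_terminating_of_not_diverging t HI HG) HI sq E Hsq).
Qed.

Lemma consistent_proper t : proper F arity Rf t -> consistent t /\ zeta_ext t = zeta F arity t.
Proof.
  induction t as [x|g ts IH] using term_ind'; intros Hp.
  - split; [constructor|reflexivity].
  - inversion Hp as [|f ss cs Hl Hps Hcl Hbt E1]; subst.
    assert (Hss : Forall (fun s => consistent s /\ zeta_ext s = zeta F arity s) ss).
    { rewrite Forall_forall in IH, Hps |- *. intros s Hs. apply IH; auto. apply in_or_app; auto. }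
    split.
    + constructor; auto. eapply Forall_impl; [|exact Hss]. intros a; tauto.
    + rewrite zeta_ext_HF by auto. simpl. rewrite <- Hl, map_app, skipn_app, firstn_app.
      rewrite skipn_all, Nat.sub_diag, length_map, Nat.sub_diag, firstn_O, app_nil_r, firstn_all2
        by (rewrite length_map; lia).
      simpl. f_equal. apply map_ext_in.
      rewrite Forall_forall in Hss. intros a Ha. apply Hss; auto.
Qed.

Lemma proper_nonterminating_linf s : proper F arity Rf s -> nonterminating s ->
  linf F Rf (zeta F arity s).
Proof.
  intros Hp HN. destruct (consistent_proper s Hp) as [HI Hz].
  destruct (dependent_choice_seq
              (fun g => exists t, consistent t /\ nonterminating t /\ gsteps g (zeta_ext t))
              gstep) with (a0 := zeta F arity s) as [sq [E Hsq]].
  - intros g [t [HIt [HNt Hs]]]. inversion Hs as [|b c Hab Hbc]; subst.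
    + destruct (progress t HIt HNt) as [t' [H1 [H2 [g1 [H3 H4]]]]].
      exists g1. split; auto. exists t'. auto.
    + exists b. split; auto. exists t. auto.
  - exists s. rewrite Hz. repeat split; auto. constructor.
  - exists sq. auto.
Qed.

End Simulation.

Theorem lemmaA (F : Type) (arity : F -> nat) (Rf : F -> list (crule F))
  (s : hterm F) :
  strong_CCTRS F arity Rf ->
  proper F arity Rf s -> ground s ->
  nonterminating F arity Rf s ->
  linf F Rf (zeta F arity s).
Proof.
  intros HS Hp _ HN. exact (proper_nonterminating_linf F arity Rf (proj1 HS) s Hp HN).
Qed.
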